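(* $[\mathbf{Txt}\mathbf{Sd}\mathbf{Ex}] \setminus [\mathcal{R}\mathbf{Txt}\mathbf{Sd}\mathbf{Ex}] \neq \emptyset$; that is, there is a class of languages that can be $\mathbf{Txt}\mathbf{Sd}\mathbf{Ex}$-learned by some (possibly partial) computable learner but by no total computable learner.
   Context: Fix an acceptable numbering $(\varphi_e)$ of partial computable functions, $W_e=\mathrm{dom}(\varphi_e)$. A text is a total function $T:\mathbb N\to\mathbb N\cup\{\#\}$, $\mathrm{content}(T)=\mathrm{range}(T)\setminus\{\#\}$, $T[n]=(T(0),\dots,T(n-1))$; $\mathbf{Txt}(L)$ is the set of texts with content $L$. Learners are partial computable functions; $\mathbf{Sd}(h,T)(i)=h(\mathrm{content}(T[i]))$. For total $p$ and text $T$: $\mathbf{Ex}(p,T)$ iff $\exists n_0\,\forall n\ge n_0: p(n)=p(n_0)\wedge W_{p(n_0)}=\mathrm{content}(T)$. $h$ $\mathbf{Txt}\mathbf{Sd}\mathbf{Ex}$-learns $L$ iff for every $T\in\mathbf{Txt}(L)$, $\mathbf{Sd}(h,T)$ is total and $\mathbf{Ex}(\mathbf{Sd}(h,T),T)$. $[\mathbf{Txt}\mathbf{Sd}\mathbf{Ex}]$ is the set of classes learnable by a single learner; $[\mathcal R\mathbf{Txt}\mathbf{Sd}\mathbf{Ex}]$ is the same with the learner required to be a total computable function ($\mathcal R$ = total computable functions). *)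

From Stdlib Require Import Arith List.
Import ListNotations.

Inductive prog : Type :=
| PZero : prog
| PSucc : prog
| PProj : nat -> prog
| PComp : prog -> list prog -> prog
| PPrec : prog -> prog -> prog
| PMu   : prog -> prog.

Inductive eval : prog -> list nat -> nat -> Prop :=
| ev_zero : forall args, eval PZero args 0
| ev_succ : forall x args, eval PSucc (x :: args) (S x)
| ev_proj : forall i args, eval (PProj i) args (nth i args 0)
| ev_comp : forall f gs args ys y,
    Forall2 (fun g v => eval g args v) gs ys ->
    eval f ys y ->
    eval (PComp f gs) args y
| ev_prec0 : forall f g args y,
    eval f args y -> eval (PPrec f g) (0 :: args) y
| ev_precS : forall f g x args r y,
    eval (PPrec f g) (x :: args) r ->
    eval g (x :: r :: args) y ->
    eval (PPrec f g) (S x :: args) y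
| ev_mu : forall f args y,
    eval f (y :: args) 0 ->
    (forall z, z < y -> exists v, v <> 0 /\ eval f (z :: args) v) ->
    eval (PMu f) args y.

Definition npair (a b : nat) : nat := 2 ^ a * (2 * b + 1).

Fixpoint code (p : prog) : nat :=
  match p with
  | PZero => npair 0 0
  | PSucc => npair 1 0
  | PProj i => npair 2 i
  | PComp f gs =>
      let fix code_list (l : list prog) : nat :=
        match l with
        | [] => 0
        | g :: l' => npair (code g) (code_list l')
        end in
      npair 3 (npair (code f) (code_list gs))
  | PPrec f g => npair 4 (npair (code f) (code g))
  | PMu f => npair 5 (code f)
  end.

(** The numbering: phi e x = y iff e codes a program computing y on input x;
    numbers that code no program denote the everywhere-undefined function. *)
Definition phi (e x y : nat) : Prop :=
  exists p : prog, code p = e /\ eval p [x] y.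

Definition W (e : nat) (x : nat) : Prop := exists y, phi e x y.

(** * Texts; [None] plays the role of the pause symbol # *)
Definition text := nat -> option nat.

Definition content (T : text) (x : nat) : Prop := exists n, T n = Some x.

Definition Txt (L : nat -> Prop) (T : text) : Prop :=
  forall x, content T x <-> L x.

(** Canonical index of the finite set content(T[i]) = {T(j) | j < i, T(j) <> #}:
    the number whose binary expansion has bit x set iff x is in the set. *)
Fixpoint content_code (T : text) (i : nat) : nat :=
  match i with
  | 0 => 0
  | S i' =>
      match T i' with
      | Some x => Nat.lor (content_code T i') (2 ^ x)
      | None => content_code T i'
      end
  end.

Definition Ex (p : nat -> nat) (T : text) : Prop :=
  exists n0, forall n, n0 <= n ->
    p n = p n0 /\ (forall x, W (p n0) x <-> content T x).

(** The learner with index h TxtSdEx-learns L:  for every text T for L,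
    Sd(h,T)(i) = phi_h(content(T[i])) is total (given by some p) and Ex(p,T). *)
Definition TxtSdEx_learns (h : nat) (L : nat -> Prop) : Prop :=
  forall T : text, Txt L T ->
    exists p : nat -> nat,
      (forall i, phi h (content_code T i) (p i)) /\ Ex p T.

Definition lang_class := (nat -> Prop) -> Prop.

Definition TxtSdEx_learns_class (h : nat) (C : lang_class) : Prop :=
  forall L, C L -> TxtSdEx_learns h L.

Definition in_TxtSdEx (C : lang_class) : Prop :=
  exists h, TxtSdEx_learns_class h C.

Definition total_index (h : nat) : Prop := forall x, exists y, phi h x y.

Definition in_RTxtSdEx (C : lang_class) : Prop :=
  exists h, total_index h /\ TxtSdEx_learns_class h C.

(* Let [e] be a total learner.  Build finite sets in stages: stage 0 is empty, and stage [k+1] adds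
   to stage [k] the least element <e, k, j> on which [e] changes its conjecture.  If every stage is
   defined, [e] changes its mind infinitely often on the text listing the union of the stages.  If
   stage [k] is undefined, [e] makes the same conjecture on stage [k] and on stage [k] plus
   <e, k, 0>, so it fails on one of these two finite languages.  One partial learner learns all
   these languages for all [e]: it reads [e] off the least element of its input and reruns the
   construction through a universal program, which halts on every input coming from a text for
   one of them. *)

From Stdlib Require Import Arith List Lia Setoid ClassicalEpsilon Classical_Prop.
Import ListNotations.

(** * Mu-recursive programs *)

(* The derived [eval_ind] has no induction hypothesis for the [Forall2] premise of [ev_comp]. *)
Section EvalInd.
Variable Q : prog -> list nat -> nat -> Prop.
Hypothesis Hz : forall args, Q PZero args 0.
Hypothesis Hs : forall x args, Q PSucc (x :: args) (S x).
Hypothesis Hp : forall i args, Q (PProj i) args (nth i args 0).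
Hypothesis Hc : forall f gs args ys y,
    Forall2 (fun g v => eval g args v /\ Q g args v) gs ys ->
    eval f ys y -> Q f ys y -> Q (PComp f gs) args y.
Hypothesis Hp0 : forall f g args y, eval f args y -> Q f args y -> Q (PPrec f g) (0 :: args) y.
Hypothesis HpS : forall f g x args r y,
    eval (PPrec f g) (x :: args) r -> Q (PPrec f g) (x :: args) r ->
    eval g (x :: r :: args) y -> Q g (x :: r :: args) y ->
    Q (PPrec f g) (S x :: args) y.
Hypothesis Hm : forall f args y,
    eval f (y :: args) 0 -> Q f (y :: args) 0 ->
    (forall z, z < y -> exists v, v <> 0 /\ eval f (z :: args) v /\ Q f (z :: args) v) ->
    Q (PMu f) args y.

Fixpoint eval_ind_nested p a y (H : eval p a y) {struct H} : Q p a y :=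
  match H in eval p a y return Q p a y with
  | ev_zero args => Hz args
  | ev_succ x args => Hs x args
  | ev_proj i args => Hp i args
  | ev_comp f gs args ys y HF Hf =>
      Hc f gs args ys y
        ((fix F gs ys (HF : Forall2 (fun g v => eval g args v) gs ys)
            : Forall2 (fun g v => eval g args v /\ Q g args v) gs ys :=
          match HF in Forall2 _ gs ys return Forall2 (fun g v => eval g args v /\ Q g args v) gs ys with
          | Forall2_nil _ => Forall2_nil _
          | @Forall2_cons _ _ _ g v gs' ys' Hg HF' =>
              Forall2_cons g v (conj Hg (eval_ind_nested g args v Hg)) (F gs' ys' HF')
          end) gs ys HF) Hf (eval_ind_nested f ys y Hf)
  | ev_prec0 f g args y Hf => Hp0 f g args y Hf (eval_ind_nested f args y Hf)
  | ev_precS f g x args r y H1 H2 =>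
      HpS f g x args r y H1 (eval_ind_nested _ _ _ H1) H2 (eval_ind_nested _ _ _ H2)
  | ev_mu f args y H0 Hlt =>
      Hm f args y H0 (eval_ind_nested _ _ _ H0)
        (fun z hz => match Hlt z hz with
                     | ex_intro _ v (conj hv he) => ex_intro _ v (conj hv (conj he (eval_ind_nested _ _ _ he)))
                     end)
  end.
End EvalInd.

Lemma eval_functional : forall p a y, eval p a y -> forall y', eval p a y' -> y = y'.
Proof.
  apply (eval_ind_nested (fun p a y => forall y', eval p a y' -> y = y')).
  - intros args y' H; inversion H; auto.
  - intros x args y' H; inversion H; auto.
  - intros i args y' H; inversion H; auto.
  - intros f gs args ys y HF Hf IH y' H. inversion H; subst.
    match goal with H3 : Forall2 _ gs ?ys0, H5 : eval f ?ys0 y' |- _ =>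
      assert (ys = ys0) as <-; [ | apply IH; exact H5 ];
      clear - HF H3; revert ys0 H3; induction HF; intros ys0 H3; inversion H3; subst; auto;
      f_equal; [ destruct H as [_ H]; apply H; auto | apply IHHF; auto ] end.
  - intros f g args y Hf IH y' H. inversion H; subst. apply IH; auto.
  - intros f g x args r y H1 IH1 H2 IH2 y' H. inversion H; subst.
    match goal with H6 : eval (PPrec f g) (x :: args) ?r0, H7 : eval g _ _ |- _ =>
      apply IH1 in H6; subst; apply IH2; exact H7 end.
  - intros f args y H0 IH0 Hlt y' H. inversion H; subst.
    destruct (Nat.lt_trichotomy y y') as [Hl|[Hl|Hl]]; auto.
    + match goal with H4 : forall z, z < y' -> _ |- _ =>
        destruct (H4 y Hl) as [v [hv he]] end. apply IH0 in he. congruence.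
    + destruct (Hlt y' Hl) as [v [hv [he IH]]].
      match goal with H2 : eval f (y' :: args) 0 |- _ => apply IH in H2 end. congruence.
Qed.

Lemma eval_value p l y y' : eval p l y -> y = y' -> eval p l y'.
Proof. intros; subst; auto. Qed.
Lemma eval_PComp f gs l ys y : Forall2 (fun g v => eval g l v) gs ys -> eval f ys y -> eval (PComp f gs) l y.
Proof. intros; econstructor; eauto. Qed.

Create HintDb eval_db.
#[export] Hint Resolve eval_PComp : eval_db.
#[export] Hint Constructors Forall2 : eval_db.
#[export] Hint Resolve ev_zero ev_succ ev_proj : eval_db.
Ltac eval_step_hook := fail.
Ltac eval_step := first [ solve [ eauto 1 with eval_db ]
                      | eval_step_hook
                      | (eapply eval_PComp; [ eval_args | eval_step ]) ]
with eval_args := match goal with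
  | |- Forall2 _ [] _ => constructor
  | |- Forall2 _ (_ :: _) _ => eapply Forall2_cons; [ eval_step | eval_args ]
  end.
Ltac eval_solve := first [ eval_step | eval_args ].
Ltac eval_prog := eapply eval_value; [ eval_solve | cbn [nth map seq]; try reflexivity ].

Lemma eval_PPrec_seq f g rest (R : nat -> nat) :
  eval f rest (R 0) -> (forall x, eval g (x :: R x :: rest) (R (S x))) ->
  forall x, eval (PPrec f g) (x :: rest) (R x).
Proof. intros H0 HS x. induction x. constructor; auto. econstructor; eauto. Qed.

Lemma eval_PMu_least f l (F : nat -> nat) y :
  (forall z, z <= y -> eval f (z :: l) (F z)) -> F y = 0 -> (forall z, z < y -> F z <> 0) ->
  eval (PMu f) l y.
Proof.
  intros H H0 H1. constructor. rewrite <- H0. apply H; lia.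
  intros z hz. exists (F z). split. apply H1; auto. apply H; lia.
Qed.

Lemma eval_PComp_inv f gs l y :
  eval (PComp f gs) l y -> exists ys, Forall2 (fun g v => eval g l v) gs ys /\ eval f ys y.
Proof. intros H; inversion H; subst; eauto. Qed.
Lemma eval_PMu_inv f l y :
  eval (PMu f) l y -> eval f (y :: l) 0 /\ forall z, z < y -> exists v, v <> 0 /\ eval f (z :: l) v.
Proof. intros H; inversion H; subst; auto. Qed.
Lemma eval_PPrec0_inv f g l y : eval (PPrec f g) (0 :: l) y -> eval f l y.
Proof. intros H; inversion H; subst; auto. Qed.
Lemma eval_PPrecS_inv f g x l y :
  eval (PPrec f g) (S x :: l) y -> exists r, eval (PPrec f g) (x :: l) r /\ eval g (x :: r :: l) y.
Proof. intros H; inversion H; subst; eauto. Qed.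
Lemma eval_PPrec_upto f g rest (R : nat -> nat) n :
  eval f rest (R 0) -> (forall x, x < n -> eval g (x :: R x :: rest) (R (S x))) ->
  forall x, x <= n -> eval (PPrec f g) (x :: rest) (R x).
Proof.
  intros H0 HS x. induction x; intros hx; [constructor; auto|].
  econstructor; [apply IHx; lia | apply HS; lia].
Qed.

Lemma eval_PComp_arg f gs l y n : eval (PComp f gs) l y -> n < length gs -> exists v, eval (nth n gs PZero) l v.
Proof.
  intros H. apply eval_PComp_inv in H as [ys [HF _]]. revert n.
  induction HF; intros [|n] hn; cbn in *; try lia; eauto. apply IHHF; lia.
Qed.

Ltac arg_halts H n :=
  apply (eval_PComp_arg _ _ _ _ n) in H as [? H]; [cbn [nth] in H | cbn [length]; lia].

Lemma eval_PComp_iff f gs l vs y : Forall2 (fun g v => eval g l v) gs vs ->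
  eval (PComp f gs) l y <-> eval f vs y.
Proof.
  intros Hvs. split; [|apply eval_PComp; auto].
  intros H. apply eval_PComp_inv in H as [ys [HF Hf]]. replace vs with ys; auto.
  clear Hf. revert vs Hvs. induction HF; intros vs Hvs; inversion Hvs; subst; auto.
  f_equal; eauto using eval_functional.
Qed.

Definition SUC := PComp PSucc [PProj 0].
Lemma eval_SUC l : eval SUC l (S (nth 0 l 0)). Proof. eval_prog. Qed.
#[export] Hint Resolve eval_SUC : eval_db.
Fixpoint CONST n := match n with 0 => PZero | S m => PComp PSucc [CONST m] end.
Lemma eval_CONST n l : eval (CONST n) l n.
Proof. induction n; simpl. constructor. eapply eval_PComp. constructor; eauto. constructor. Qed.
#[export] Hint Resolve eval_CONST : eval_db.

Definition PREC1 f g := PComp (PPrec f g) [PProj 0].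
Definition PREC2 f g := PComp (PPrec f g) [PProj 0; PProj 1].

Lemma eval_PREC1 f g (R : nat -> nat) l :
  eval f [] (R 0) -> (forall x, eval g [x; R x] (R (S x))) ->
  eval (PREC1 f g) l (R (nth 0 l 0)).
Proof. intros H0 HS. eapply eval_PComp; [eval_solve|]. apply eval_PPrec_seq; auto. Qed.

Lemma eval_PREC2 f g (R : nat -> nat) l :
  eval f [nth 1 l 0] (R 0) -> (forall x, eval g [x; R x; nth 1 l 0] (R (S x))) ->
  eval (PREC2 f g) l (R (nth 0 l 0)).
Proof. intros H0 HS. eapply eval_PComp; [eval_solve|]. apply eval_PPrec_seq; auto. Qed.

Definition ADD := PREC2 (PProj 0) (PComp SUC [PProj 1]).
Lemma eval_ADD l : eval ADD l (nth 0 l 0 + nth 1 l 0).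
Proof. apply (eval_PREC2 _ _ (fun x => x + nth 1 l 0)); intros; eval_prog. Qed.
#[export] Hint Resolve eval_ADD : eval_db.
Definition MUL := PREC2 PZero (PComp ADD [PProj 1; PProj 2]).
Lemma eval_MUL l : eval MUL l (nth 0 l 0 * nth 1 l 0).
Proof. apply (eval_PREC2 _ _ (fun x => x * nth 1 l 0)); intros; eval_prog; lia. Qed.
#[export] Hint Resolve eval_MUL : eval_db.
Definition PRED := PREC1 PZero (PProj 0).
Lemma eval_PRED l : eval PRED l (pred (nth 0 l 0)).
Proof. apply (eval_PREC1 _ _ pred); intros; eval_prog. Qed.
#[export] Hint Resolve eval_PRED : eval_db.
Definition SUB := PComp (PREC2 (PProj 0) (PComp PRED [PProj 1])) [PProj 1; PProj 0].
Lemma eval_SUB l : eval SUB l (nth 0 l 0 - nth 1 l 0).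
Proof.
  eapply eval_PComp; [eval_solve|].
  apply (eval_PREC2 _ _ (fun x => nth 0 l 0 - x)); intros; eval_prog; lia.
Qed.
#[export] Hint Resolve eval_SUB : eval_db.
Definition sg x := match x with 0 => 0 | _ => 1 end.
Definition nsg x := match x with 0 => 1 | _ => 0 end.
Definition SG := PREC1 PZero (CONST 1).
Lemma eval_SG l : eval SG l (sg (nth 0 l 0)).
Proof. apply (eval_PREC1 _ _ sg); intros; eval_prog. Qed.
#[export] Hint Resolve eval_SG : eval_db.
Definition NSG := PREC1 (CONST 1) PZero.
Lemma eval_NSG l : eval NSG l (nsg (nth 0 l 0)).
Proof. apply (eval_PREC1 _ _ nsg); intros; eval_prog. Qed.
#[export] Hint Resolve eval_NSG : eval_db.
Definition EQN := PComp NSG [PComp ADD [SUB; PComp SUB [PProj 1; PProj 0]]].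
Lemma eval_EQN l : eval EQN l (Nat.b2n (nth 0 l 0 =? nth 1 l 0)).
Proof.
  eval_prog. destruct (Nat.eqb_spec (nth 0 l 0) (nth 1 l 0)).
  - rewrite e, Nat.sub_diag; reflexivity.
  - destruct (nth 0 l 0 - nth 1 l 0 + (nth 1 l 0 - nth 0 l 0)) eqn:E; simpl; auto. lia.
Qed.
#[export] Hint Resolve eval_EQN : eval_db.
Definition LTN := PComp SG [PComp SUB [PProj 1; PProj 0]].
Lemma eval_LTN l : eval LTN l (Nat.b2n (nth 0 l 0 <? nth 1 l 0)).
Proof.
  eval_prog. destruct (Nat.ltb_spec (nth 0 l 0) (nth 1 l 0));
  destruct (nth 1 l 0 - nth 0 l 0) eqn:E; simpl; auto; lia.
Qed.
#[export] Hint Resolve eval_LTN : eval_db.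
Definition ITE := PComp ADD [PComp MUL [PProj 1; PComp SG [PProj 0]]; PComp MUL [PProj 2; PComp NSG [PProj 0]]].
Lemma eval_ITE l : eval ITE l (if nth 0 l 0 =? 0 then nth 2 l 0 else nth 1 l 0).
Proof. eval_prog. destruct (nth 0 l 0); simpl; lia. Qed.
#[export] Hint Resolve eval_ITE : eval_db.
Definition POW2 := PREC1 (CONST 1) (PComp MUL [PProj 1; CONST 2]).
Lemma eval_POW2 l : eval POW2 l (2 ^ nth 0 l 0).
Proof. apply (eval_PREC1 _ _ (fun x => 2 ^ x)); intros; eval_prog. simpl; lia. Qed.
#[export] Hint Resolve eval_POW2 : eval_db.
Definition NPAIR := PComp MUL [PComp POW2 [PProj 0]; PComp SUC [PComp ADD [PProj 1; PProj 1]]].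
Lemma eval_NPAIR l : eval NPAIR l (npair (nth 0 l 0) (nth 1 l 0)).
Proof. eval_prog. unfold npair. f_equal. lia. Qed.
#[export] Hint Resolve eval_NPAIR : eval_db.

(** * Bounded search, pairing and codes of lists *)

Lemma eval_projs s n l : Forall2 (fun g v => eval g l v) (map PProj (seq s n)) (map (fun j => nth j l 0) (seq s n)).
Proof. revert s; induction n; intros s; simpl; constructor; auto. constructor. Qed.

Fixpoint bsum (F : nat -> nat) N := match N with 0 => 0 | S x => bsum F x + F x end.
Fixpoint bmin (F : nat -> nat) N := match N with 0 => 0 | S x =>
  let r := bmin F x in if r =? x then (if F x =? 0 then S x else x) else r end.

Definition BSUM k test := PComp (PPrec PZero (PComp ADD [PProj 1; test])) (map PProj (seq 0 (S k))).
Lemma eval_BSUM k test l (F : nat -> nat) :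
  (forall i r, eval test (i :: r :: map (fun j => nth j l 0) (seq 1 k)) (F i)) ->
  eval (BSUM k test) l (bsum F (nth 0 l 0)).
Proof.
  intros H. unfold BSUM. eapply eval_PComp. apply eval_projs. simpl.
  apply (eval_PPrec_seq _ _ _ (fun x => bsum F x)). constructor. intros x. eval_prog.
Qed.
Definition BMIN k test := PComp (PPrec PZero
   (PComp ITE [PComp EQN [PProj 1; PProj 0]; PComp ITE [test; PProj 0; SUC]; PProj 1])) (map PProj (seq 0 (S k))).
Lemma eval_BMIN k test l (F : nat -> nat) :
  (forall i r, eval test (i :: r :: map (fun j => nth j l 0) (seq 1 k)) (F i)) ->
  eval (BMIN k test) l (bmin F (nth 0 l 0)).
Proof.
  intros H. unfold BMIN. eapply eval_PComp. apply eval_projs. simpl.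
  apply (eval_PPrec_seq _ _ _ (fun x => bmin F x)). constructor. intros x. eval_prog.
  simpl. destruct (bmin F x =? x); simpl; destruct (F x); simpl; auto.
Qed.

Ltac eval_step_hook ::= first
  [ eapply eval_BSUM; intros ? ?; eapply eval_value; [eval_step | cbn [nth map seq]; reflexivity]
  | eapply eval_BMIN; intros ? ?; eapply eval_value; [eval_step | cbn [nth map seq]; reflexivity] ].

Lemma bmin_spec F N : (bmin F N < N /\ F (bmin F N) <> 0 /\ forall i, i < bmin F N -> F i = 0)
  \/ (bmin F N = N /\ forall i, i < N -> F i = 0).
Proof.
  induction N; simpl. right; split; auto; intros; lia.
  destruct IHN as [[H1 [H2 H3]]|[H1 H2]].
  - left. rewrite (proj2 (Nat.eqb_neq _ _)) by lia. repeat split; auto; lia.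
  - rewrite H1, Nat.eqb_refl. destruct (F N) eqn:E; simpl.
    + right. split; auto. intros i hi. destruct (Nat.eq_dec i N); subst; auto. apply H2; lia.
    + left. split; [lia|split]. congruence. intros i hi; apply H2; lia.
Qed.
Lemma bmin_unique F N i0 : i0 < N -> F i0 <> 0 -> (forall i, i < i0 -> F i = 0) -> bmin F N = i0.
Proof.
  intros h1 h2 h3. destruct (bmin_spec F N) as [[H1 [H2 H3]]|[H1 H2]].
  - destruct (Nat.lt_trichotomy (bmin F N) i0) as [h|[h|h]]; auto.
    + exfalso; apply H2, h3; auto.
    + exfalso; apply h2, H3; auto.
  - exfalso; apply h2, H2; auto.
Qed.

Lemma bsum_neq0 F N : bsum F N <> 0 <-> exists i, i < N /\ F i <> 0.
Proof.
  induction N; simpl. split; [lia| intros [i [h _]]; lia].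
  split.
  - intros H. destruct (F N) eqn:E. rewrite Nat.add_0_r in H. apply IHN in H.
    destruct H as [i [? ?]]; exists i; split; auto; lia. exists N; split; auto; lia.
  - intros [i [h1 h2]]. destruct (Nat.eq_dec i N). subst; lia.
    assert (bsum F N <> 0) by (apply IHN; exists i; split; auto; lia). lia.
Qed.

Lemma mul_neq0 a b : a * b <> 0 <-> a <> 0 /\ b <> 0.
Proof. rewrite Nat.mul_eq_0. tauto. Qed.
Lemma b2n_eqb_neq0 x y : Nat.b2n (x =? y) <> 0 <-> x = y.
Proof. destruct (Nat.eqb_spec x y); simpl; split; auto; congruence. Qed.
Lemma sg_neq0 x : sg x <> 0 <-> x <> 0.
Proof. destruct x; simpl; split; auto; congruence. Qed.
Lemma nsg_neq0 x : nsg x <> 0 <-> x = 0.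
Proof. destruct x; simpl; split; auto; congruence. Qed.
Lemma sg_le_1 x : sg x <= 1. Proof. destruct x; simpl; lia. Qed.
Lemma bsum_01_le F n : (forall k, F k <= 1) -> bsum F n <= n.
Proof. intros H; induction n; simpl; auto. specialize (H n); lia. Qed.
Lemma bsum_01_full F n : (forall k, F k <= 1) -> Nat.b2n (bsum F n =? n) <> 0 <-> forall k, k < n -> F k <> 0.
Proof.
  intros H. rewrite b2n_eqb_neq0. induction n; simpl. split; auto; intros; lia.
  split.
  - intros E k hk. pose proof (bsum_01_le F n H). pose proof (H n).
    assert (bsum F n = n) by lia. destruct (Nat.eq_dec k n). subst; lia. apply IHn; auto; lia.
  - intros A. rewrite (proj2 IHn) by (intros; apply A; lia). specialize (A n ltac:(lia)). specialize (H n). lia.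
Qed.

Definition divf n m := bmin (fun q => Nat.b2n (n <? S q * m)) (S n).
Definition DIV := PComp (BMIN 2 (PComp LTN [PProj 2; PComp MUL [SUC; PProj 3]])) [SUC; PProj 0; PProj 1].
Lemma eval_DIV l : eval DIV l (divf (nth 0 l 0) (nth 1 l 0)).
Proof.
  unfold DIV. eapply eval_PComp; [eval_solve|]. eapply eval_value.
  - apply (eval_BMIN _ _ _ (fun q => Nat.b2n (nth 0 l 0 <? S q * nth 1 l 0))). intros i r. eval_prog.
  - reflexivity.
Qed.
#[export] Hint Resolve eval_DIV : eval_db.
Lemma divf_div n m : 0 < m -> divf n m = n / m.
Proof.
  intros Hm. unfold divf. apply bmin_unique.
  - assert (n / m <= n) by (apply Nat.Div0.div_le_upper_bound; nia). lia.
  - destruct (Nat.ltb_spec n (S (n / m) * m)); simpl; auto.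
    pose proof (Nat.div_mod n m ltac:(lia)). pose proof (Nat.mod_upper_bound n m ltac:(lia)). nia.
  - intros i hi. destruct (Nat.ltb_spec n (S i * m)); simpl; auto.
    pose proof (Nat.div_mod n m ltac:(lia)). nia.
Qed.
Definition MOD2 := PComp SUB [PProj 0; PComp MUL [CONST 2; PComp DIV [PProj 0; CONST 2]]].
Lemma eval_MOD2 l : eval MOD2 l (nth 0 l 0 mod 2).
Proof. eval_prog. rewrite divf_div by lia. pose proof (Nat.div_mod (nth 0 l 0) 2). lia. Qed.
#[export] Hint Resolve eval_MOD2 : eval_db.
Definition TB := PComp MOD2 [PComp DIV [PProj 0; PComp POW2 [PProj 1]]].
Lemma eval_TB l : eval TB l (Nat.b2n (Nat.testbit (nth 0 l 0) (nth 1 l 0))).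
Proof.
  eval_prog. rewrite divf_div, Nat.testbit_spec'; auto. apply Nat.neq_0_lt_0, Nat.pow_nonzero; lia.
Qed.
#[export] Hint Resolve eval_TB : eval_db.

Definition nfst n := bmin (fun a => (n / 2 ^ a) mod 2) n.
Definition nsnd n := n / 2 ^ nfst n / 2.
Definition NFST :=
  PComp (BMIN 1 (PComp MOD2 [PComp DIV [PProj 2; PComp POW2 [PProj 0]]])) [PProj 0; PProj 0].
Lemma eval_NFST l : eval NFST l (nfst (nth 0 l 0)).
Proof.
  unfold NFST. eapply eval_PComp; [eval_solve|]. eapply eval_value.
  - apply (eval_BMIN _ _ _ (fun a => (nth 0 l 0 / 2 ^ a) mod 2)). intros i r. eval_prog.
    rewrite divf_div; auto. apply Nat.neq_0_lt_0, Nat.pow_nonzero; lia.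
  - reflexivity.
Qed.
#[export] Hint Resolve eval_NFST : eval_db.
Definition NSND := PComp DIV [PComp DIV [PProj 0; PComp POW2 [NFST]]; CONST 2].
Lemma eval_NSND l : eval NSND l (nsnd (nth 0 l 0)).
Proof.
  eval_prog. unfold nsnd. rewrite (divf_div _ 2) by lia. rewrite divf_div; auto.
  apply Nat.neq_0_lt_0, Nat.pow_nonzero; lia.
Qed.
#[export] Hint Resolve eval_NSND : eval_db.

Lemma npair_pos a b : 0 < npair a b.
Proof. unfold npair. pose proof (Nat.pow_nonzero 2 a). nia. Qed.
Lemma npair_neq0 a b : npair a b <> 0.
Proof. pose proof (npair_pos a b). lia. Qed.
Lemma npair_gt_l a b : a < npair a b.
Proof. unfold npair. pose proof (Nat.pow_gt_lin_r 2 a ltac:(lia)). nia. Qed.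
Lemma npair_gt_r a b : b < npair a b.
Proof. unfold npair. pose proof (Nat.pow_nonzero 2 a). nia. Qed.
Lemma npair_div a b i : i <= a -> npair a b / 2 ^ i = 2 ^ (a - i) * (2 * b + 1).
Proof.
  intros h. unfold npair. replace a with ((a - i) + i) at 1 by lia. rewrite Nat.pow_add_r.
  replace (2 ^ (a - i) * 2 ^ i * (2 * b + 1)) with (2 ^ (a - i) * (2 * b + 1) * 2 ^ i) by ring.
  rewrite Nat.div_mul. auto. apply Nat.pow_nonzero; lia.
Qed.
Lemma nfst_npair a b : nfst (npair a b) = a.
Proof.
  unfold nfst. apply bmin_unique. apply npair_gt_l.
  - rewrite npair_div by lia. rewrite Nat.sub_diag, Nat.pow_0_r, Nat.mul_1_l.
    replace (2 * b + 1) with (1 + b * 2) by lia. rewrite Nat.Div0.mod_add. simpl; lia.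
  - intros i hi. rewrite npair_div by lia. replace (a - i) with (S (a - i - 1)) by lia.
    rewrite Nat.pow_succ_r'.
    replace (2 * 2 ^ (a - i - 1) * (2 * b + 1)) with ((2 ^ (a - i - 1) * (2 * b + 1)) * 2) by ring.
    apply Nat.Div0.mod_mul.
Qed.
Lemma nsnd_npair a b : nsnd (npair a b) = b.
Proof.
  unfold nsnd. rewrite nfst_npair. rewrite npair_div by lia. rewrite Nat.sub_diag, Nat.pow_0_r, Nat.mul_1_l.
  replace (2 * b + 1) with (1 + b * 2) by lia. rewrite Nat.div_add by lia. auto.
Qed.
Lemma npair_inj a b a' b' : npair a b = npair a' b' -> a = a' /\ b = b'.
Proof.
  intros H. split. rewrite <- (nfst_npair a b), <- (nfst_npair a' b'), H; auto.
  rewrite <- (nsnd_npair a b), <- (nsnd_npair a' b'), H; auto.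
Qed.
Lemma npair_surj n : n <> 0 -> exists a b, n = npair a b.
Proof.
  induction n as [n IH] using lt_wf_ind. intros hn.
  destruct (Nat.Even_or_Odd n) as [[m Hm]|[m Hm]].
  - destruct (IH m ltac:(lia) ltac:(lia)) as [a [b Hab]]. exists (S a), b. subst. unfold npair. simpl. lia.
  - exists 0, m. unfold npair. simpl. lia.
Qed.
Lemma nsnd_0 : nsnd 0 = 0. Proof. reflexivity. Qed.
Opaque nfst nsnd.

Fixpoint list_code (l : list nat) := match l with [] => 0 | x :: l' => npair x (list_code l') end.
Lemma list_code_surj n : exists l, list_code l = n.
Proof.
  induction n as [n IH] using lt_wf_ind. destruct (Nat.eq_dec n 0). exists []; auto.
  destruct (npair_surj n n0) as [a [b ->]]. destruct (IH b (npair_gt_r a b)) as [l Hl].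
  exists (a :: l). simpl; congruence.
Qed.
Lemma list_code_inj l l' : list_code l = list_code l' -> l = l'.
Proof.
  revert l'; induction l; destruct l'; simpl; intros H; auto.
  pose proof (npair_pos n (list_code l')); lia. pose proof (npair_pos a (list_code l)); lia.
  apply npair_inj in H. destruct H. f_equal; auto.
Qed.
Definition ITER_NSND := PREC2 (PProj 0) (PComp NSND [PProj 1]).
Lemma eval_ITER_NSND l : eval ITER_NSND l (Nat.iter (nth 0 l 0) nsnd (nth 1 l 0)).
Proof. apply (eval_PREC2 _ _ (fun x => Nat.iter x nsnd (nth 1 l 0))); intros; eval_prog. Qed.
#[export] Hint Resolve eval_ITER_NSND : eval_db.
Definition nth_code i L := nfst (Nat.iter i nsnd L).
Definition NTH_CODE := PComp NFST [ITER_NSND].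
Lemma eval_NTH_CODE l : eval NTH_CODE l (nth_code (nth 0 l 0) (nth 1 l 0)).
Proof. eval_prog. Qed.
#[export] Hint Resolve eval_NTH_CODE : eval_db.
Definition length_code L := bmin (fun k => Nat.b2n (Nat.iter k nsnd L =? 0)) (S L).
Definition LENGTH_CODE :=
  PComp (BMIN 1 (PComp EQN [PComp ITER_NSND [PProj 0; PProj 2]; CONST 0])) [SUC; PProj 0].
Lemma eval_LENGTH_CODE l : eval LENGTH_CODE l (length_code (nth 0 l 0)).
Proof.
  unfold LENGTH_CODE. eapply eval_PComp; [eval_solve|]. eapply eval_value.
  - apply (eval_BMIN _ _ _ (fun k => Nat.b2n (Nat.iter k nsnd (nth 0 l 0) =? 0))). intros i r. eval_prog.
  - reflexivity.
Qed.
#[export] Hint Resolve eval_LENGTH_CODE : eval_db.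

Lemma nsnd_list_code l : nsnd (list_code l) = list_code (tl l).
Proof. destruct l; simpl. apply nsnd_0. apply nsnd_npair. Qed.
Lemma tl_skipn {A} i (l : list A) : tl (skipn i l) = skipn (S i) l.
Proof. revert l; induction i; intros l; destruct l; simpl; auto. Qed.
Lemma iter_nsnd_list_code i l : Nat.iter i nsnd (list_code l) = list_code (skipn i l).
Proof.
  induction i; auto. change (Nat.iter (S i) nsnd (list_code l)) with (nsnd (Nat.iter i nsnd (list_code l))).
  rewrite IHi, nsnd_list_code, tl_skipn. auto.
Qed.
Lemma nth_code_list_code i l : nth_code i (list_code l) = nth i l 0.
Proof.
  unfold nth_code. rewrite iter_nsnd_list_code. revert l; induction i; intros l; destruct l; simpl; auto.
  rewrite nfst_npair; auto.
Qed.
Lemma length_code_list_code l : length_code (list_code l) = length l.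
Proof.
  unfold length_code. apply bmin_unique.
  - simpl. clear. induction l; simpl; auto. pose proof (npair_gt_r a (list_code l)). lia.
  - rewrite iter_nsnd_list_code, skipn_all. simpl. auto.
  - intros i hi. rewrite iter_nsnd_list_code. destruct (skipn i l) eqn:E.
    apply (f_equal (@length nat)) in E. rewrite length_skipn in E. simpl in E. lia.
    simpl. pose proof (npair_pos n (list_code l0)).
    destruct (Nat.eqb_spec (npair n (list_code l0)) 0); simpl; auto. lia.
Qed.
Lemma nth_code_In m Js : m < length Js -> In (nth_code m (list_code Js)) Js.
Proof. intros; rewrite nth_code_list_code. apply nth_In; auto. Qed.

Lemma code_comp f gs : code (PComp f gs) = npair 3 (npair (code f) (list_code (map code gs))).
Proof. simpl. f_equal. f_equal. try (induction gs; simpl; auto; f_equal; auto). Qed.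
Lemma code_zero : code PZero = npair 0 0. Proof. reflexivity. Qed.
Lemma code_succ : code PSucc = npair 1 0. Proof. reflexivity. Qed.
Lemma code_proj i : code (PProj i) = npair 2 i. Proof. reflexivity. Qed.
Lemma code_prec f g : code (PPrec f g) = npair 4 (npair (code f) (code g)). Proof. reflexivity. Qed.
Lemma code_mu f : code (PMu f) = npair 5 (code f). Proof. reflexivity. Qed.
Opaque npair.

Section ProgInd.
Variable Q : prog -> Prop.
Hypotheses (Q0 : Q PZero) (Q1 : Q PSucc) (Q2 : forall i, Q (PProj i))
  (Q3 : forall f gs, Q f -> Forall Q gs -> Q (PComp f gs))
  (Q4 : forall f g, Q f -> Q g -> Q (PPrec f g)) (Q5 : forall f, Q f -> Q (PMu f)).
Fixpoint prog_ind_nested p : Q p :=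
  match p with
  | PZero => Q0 | PSucc => Q1 | PProj i => Q2 i
  | PComp f gs => Q3 f gs (prog_ind_nested f)
      ((fix F l : Forall Q l :=
          match l with [] => Forall_nil _ | g :: l' => Forall_cons g (prog_ind_nested g) (F l') end) gs)
  | PPrec f g => Q4 f g (prog_ind_nested f) (prog_ind_nested g)
  | PMu f => Q5 f (prog_ind_nested f)
  end.
End ProgInd.

Lemma code_inj : forall p q, code p = code q -> p = q.
Proof.
  intros p. induction p using prog_ind_nested; intros q Hq; destruct q;
  rewrite ?code_comp, ?code_zero, ?code_succ, ?code_proj, ?code_prec, ?code_mu in *;
  apply npair_inj in Hq; destruct Hq as [Ht Hp]; try discriminate; auto.
  - apply npair_inj in Hp. destruct Hp as [Hf Hl]. apply list_code_inj in Hl. f_equal. auto.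
    clear - H Hl. revert l Hl. induction H; intros l' Hl; destruct l'; simpl in Hl; try discriminate; auto.
    injection Hl; intros. f_equal; auto.
  - apply npair_inj in Hp. destruct Hp. f_equal; auto.
  - f_equal; auto.
Qed.

(** * A universal program *)

(* A certificate is the [list_code] of a list of entries [npair c (npair a (npair y w))], each
   claiming that the program coded by [c] maps the arguments coded by [a] to [y]; [w] holds the
   intermediate values (argument values of a composition, previous value of a recursion step).
   A certificate is valid when every entry follows by one rule of [eval] from entries of the same
   certificate; [UNIV] searches for the least valid certificate with an entry for [c] on [[x]]. *)
Definition entry_in E := nfst (nsnd E).
Definition entry_out E := nfst (nsnd (nsnd E)).
Definition entry_aux E := nsnd (nsnd (nsnd E)).
Definition ENTRY_IN := PComp NFST [NSND].
Definition ENTRY_OUT := PComp NFST [PComp NSND [NSND]].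
Definition ENTRY_AUX := PComp NSND [PComp NSND [NSND]].
Lemma eval_ENTRY_IN l : eval ENTRY_IN l (entry_in (nth 0 l 0)). Proof. eval_prog. Qed.
Lemma eval_ENTRY_OUT l : eval ENTRY_OUT l (entry_out (nth 0 l 0)). Proof. eval_prog. Qed.
Lemma eval_ENTRY_AUX l : eval ENTRY_AUX l (entry_aux (nth 0 l 0)). Proof. eval_prog. Qed.
#[export] Hint Resolve eval_ENTRY_IN eval_ENTRY_OUT eval_ENTRY_AUX : eval_db.

Definition EQ a b := PComp EQN [a; b].
Definition AND a b := PComp MUL [a; b].

Definition has_entry J c a y :=
  sg (bsum (fun m => Nat.b2n (nfst (nth_code m J) =? c) * Nat.b2n (entry_in (nth_code m J) =? a)
                     * Nat.b2n (entry_out (nth_code m J) =? y)) (length_code J)).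
Definition ENTRY_AT := PComp NTH_CODE [PProj 0; PProj 2].
Definition HAS_ENTRY_TEST :=
  AND (AND (EQ (PComp NFST [ENTRY_AT]) (PProj 3)) (EQ (PComp ENTRY_IN [ENTRY_AT]) (PProj 4)))
      (EQ (PComp ENTRY_OUT [ENTRY_AT]) (PProj 5)).
Definition HAS_ENTRY :=
  PComp SG [PComp (BSUM 4 HAS_ENTRY_TEST) [PComp LENGTH_CODE [PProj 0]; PProj 0; PProj 1; PProj 2; PProj 3]].
Lemma eval_HAS_ENTRY l : eval HAS_ENTRY l (has_entry (nth 0 l 0) (nth 1 l 0) (nth 2 l 0) (nth 3 l 0)).
Proof. eval_prog. Qed.
#[export] Hint Resolve eval_HAS_ENTRY : eval_db.

Definition has_nz_entry J c a :=
  sg (bsum (fun m => Nat.b2n (nfst (nth_code m J) =? c) * Nat.b2n (entry_in (nth_code m J) =? a)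
                     * nsg (Nat.b2n (entry_out (nth_code m J) =? 0))) (length_code J)).
Definition HAS_NZ_ENTRY_TEST :=
  AND (AND (EQ (PComp NFST [ENTRY_AT]) (PProj 3)) (EQ (PComp ENTRY_IN [ENTRY_AT]) (PProj 4)))
      (PComp NSG [EQ (PComp ENTRY_OUT [ENTRY_AT]) (CONST 0)]).
Definition HAS_NZ_ENTRY :=
  PComp SG [PComp (BSUM 3 HAS_NZ_ENTRY_TEST) [PComp LENGTH_CODE [PProj 0]; PProj 0; PProj 1; PProj 2]].
Lemma eval_HAS_NZ_ENTRY l : eval HAS_NZ_ENTRY l (has_nz_entry (nth 0 l 0) (nth 1 l 0) (nth 2 l 0)).
Proof. eval_prog. Qed.
#[export] Hint Resolve eval_HAS_NZ_ENTRY : eval_db.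

Section Justification.
Variables E J : nat.
Definition entry_prog := nfst E.
Definition entry_tag := nfst entry_prog.
Definition entry_body := nsnd entry_prog.
Definition just_zero := Nat.b2n (entry_body =? 0) * Nat.b2n (entry_out E =? 0).
Definition just_succ :=
  Nat.b2n (entry_body =? 0) * sg (entry_in E) * Nat.b2n (entry_out E =? S (nfst (entry_in E))).
Definition just_proj := Nat.b2n (entry_out E =? nth_code entry_body (entry_in E)).
Definition comp_args_entries :=
  Nat.b2n (bsum (fun k => has_entry J (nth_code k (nsnd entry_body)) (entry_in E) (nth_code k (entry_aux E)))
                (length_code (nsnd entry_body)) =? length_code (nsnd entry_body)).
Definition just_comp :=
  sg entry_body * Nat.b2n (length_code (entry_aux E) =? length_code (nsnd entry_body)) * comp_args_entries
  * has_entry J (nfst entry_body) (entry_aux E) (entry_out E).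
Definition just_prec :=
  sg entry_body * sg (entry_in E) *
  (if nfst (entry_in E) =? 0 then has_entry J (nfst entry_body) (nsnd (entry_in E)) (entry_out E)
   else has_entry J entry_prog (npair (pred (nfst (entry_in E))) (nsnd (entry_in E))) (entry_aux E) *
        has_entry J (nsnd entry_body)
          (npair (pred (nfst (entry_in E))) (npair (entry_aux E) (nsnd (entry_in E)))) (entry_out E)).
Definition mu_below_entries :=
  Nat.b2n (bsum (fun z => has_nz_entry J entry_body (npair z (entry_in E))) (entry_out E) =? entry_out E).
Definition just_mu := has_entry J entry_body (npair (entry_out E) (entry_in E)) 0 * mu_below_entries.
Definition justified :=
  sg entry_prog *
  (Nat.b2n (entry_tag =? 0) * just_zero + (Nat.b2n (entry_tag =? 1) * just_succ +
  (Nat.b2n (entry_tag =? 2) * just_proj + (Nat.b2n (entry_tag =? 3) * just_comp +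
  (Nat.b2n (entry_tag =? 4) * just_prec + Nat.b2n (entry_tag =? 5) * just_mu))))).
End Justification.

Definition E_PROG := PComp NFST [PProj 0].
Definition E_IN := PComp ENTRY_IN [PProj 0].
Definition E_OUT := PComp ENTRY_OUT [PProj 0].
Definition E_AUX := PComp ENTRY_AUX [PProj 0].
Definition E_TAG := PComp NFST [E_PROG].
Definition E_BODY := PComp NSND [E_PROG].
Definition E_BODY1 := PComp NFST [E_BODY].
Definition E_BODY2 := PComp NSND [E_BODY].
Definition JUST_ZERO := AND (EQ E_BODY (CONST 0)) (EQ E_OUT (CONST 0)).
Definition JUST_SUCC :=
  AND (AND (EQ E_BODY (CONST 0)) (PComp SG [E_IN])) (EQ E_OUT (PComp SUC [PComp NFST [E_IN]])).
Definition JUST_PROJ := EQ E_OUT (PComp NTH_CODE [E_BODY; E_IN]).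
Definition COMP_ARGS_TEST :=
  PComp HAS_ENTRY [PProj 2; PComp NTH_CODE [PProj 0; PProj 3]; PProj 4; PComp NTH_CODE [PProj 0; PProj 5]].
Definition COMP_ARGS :=
  EQ (PComp (BSUM 4 COMP_ARGS_TEST) [PComp LENGTH_CODE [E_BODY2]; PProj 1; E_BODY2; E_IN; E_AUX])
     (PComp LENGTH_CODE [E_BODY2]).
Definition JUST_COMP :=
  AND (AND (AND (PComp SG [E_BODY]) (EQ (PComp LENGTH_CODE [E_AUX]) (PComp LENGTH_CODE [E_BODY2]))) COMP_ARGS)
      (PComp HAS_ENTRY [PProj 1; E_BODY1; E_AUX; E_OUT]).
Definition JUST_PREC0 := PComp HAS_ENTRY [PProj 1; E_BODY1; PComp NSND [E_IN]; E_OUT].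
Definition JUST_PRECS :=
  AND (PComp HAS_ENTRY [PProj 1; E_PROG; PComp NPAIR [PComp PRED [PComp NFST [E_IN]]; PComp NSND [E_IN]]; E_AUX])
      (PComp HAS_ENTRY [PProj 1; E_BODY2;
         PComp NPAIR [PComp PRED [PComp NFST [E_IN]]; PComp NPAIR [E_AUX; PComp NSND [E_IN]]]; E_OUT]).
Definition JUST_PREC :=
  AND (AND (PComp SG [E_BODY]) (PComp SG [E_IN])) (PComp ITE [PComp NFST [E_IN]; JUST_PRECS; JUST_PREC0]).
Definition MU_BELOW_TEST := PComp HAS_NZ_ENTRY [PProj 2; PProj 3; PComp NPAIR [PProj 0; PProj 4]].
Definition MU_BELOW := EQ (PComp (BSUM 3 MU_BELOW_TEST) [E_OUT; PProj 1; E_BODY; E_IN]) E_OUT.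
Definition JUST_MU := AND (PComp HAS_ENTRY [PProj 1; E_BODY; PComp NPAIR [E_OUT; E_IN]; CONST 0]) MU_BELOW.
Definition JUST_CASES :=
  PComp ADD [AND (EQ E_TAG (CONST 0)) JUST_ZERO; PComp ADD [AND (EQ E_TAG (CONST 1)) JUST_SUCC;
  PComp ADD [AND (EQ E_TAG (CONST 2)) JUST_PROJ; PComp ADD [AND (EQ E_TAG (CONST 3)) JUST_COMP;
  PComp ADD [AND (EQ E_TAG (CONST 4)) JUST_PREC; AND (EQ E_TAG (CONST 5)) JUST_MU]]]]].
Definition JUST := AND (PComp SG [E_PROG]) JUST_CASES.

Lemma eval_COMP_ARGS l : eval COMP_ARGS l (comp_args_entries (nth 0 l 0) (nth 1 l 0)).
Proof. eval_prog. Qed.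
Lemma eval_MU_BELOW l : eval MU_BELOW l (mu_below_entries (nth 0 l 0) (nth 1 l 0)).
Proof. eval_prog. Qed.
#[export] Hint Resolve eval_COMP_ARGS eval_MU_BELOW : eval_db.
Lemma eval_JUST l : eval JUST l (justified (nth 0 l 0) (nth 1 l 0)).
Proof.
  unfold JUST, JUST_CASES, JUST_ZERO, JUST_SUCC, JUST_PROJ, JUST_COMP, JUST_PREC, JUST_MU, JUST_PREC0,
    JUST_PRECS, AND, EQ, E_PROG, E_IN, E_OUT, E_AUX, E_TAG, E_BODY, E_BODY1, E_BODY2.
  eval_prog.
Qed.
#[export] Hint Resolve eval_JUST : eval_db.

Definition valid_cert J := Nat.b2n (bsum (fun m => sg (justified (nth_code m J) J)) (length_code J) =? length_code J).
Definition VALID_TEST := PComp SG [PComp JUST [PComp NTH_CODE [PProj 0; PProj 2]; PProj 2]].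
Definition VALID :=
  EQ (PComp (BSUM 1 VALID_TEST) [PComp LENGTH_CODE [PProj 0]; PProj 0]) (PComp LENGTH_CODE [PProj 0]).
Lemma eval_VALID l : eval VALID l (valid_cert (nth 0 l 0)).
Proof. eval_prog. Qed.
#[export] Hint Resolve eval_VALID : eval_db.

Definition entry_matches J c x m :=
  Nat.b2n (nfst (nth_code m J) =? c) * Nat.b2n (entry_in (nth_code m J) =? npair x 0).
Definition MATCH_TEST :=
  AND (EQ (PComp NFST [ENTRY_AT]) (PProj 3)) (EQ (PComp ENTRY_IN [ENTRY_AT]) (PComp NPAIR [PProj 4; CONST 0])).
Definition cert_for J c x := valid_cert J * sg (bsum (entry_matches J c x) (length_code J)).
Definition CERT_FOR :=
  AND (PComp VALID [PProj 0])
      (PComp SG [PComp (BSUM 3 MATCH_TEST) [PComp LENGTH_CODE [PProj 0]; PProj 0; PProj 1; PProj 2]]).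
Lemma eval_CERT_FOR l : eval CERT_FOR l (cert_for (nth 0 l 0) (nth 1 l 0) (nth 2 l 0)).
Proof. eval_prog. Qed.
#[export] Hint Resolve eval_CERT_FOR : eval_db.
Definition find_entry J c x := bmin (entry_matches J c x) (length_code J).
Definition FIND_ENTRY := PComp (BMIN 3 MATCH_TEST) [PComp LENGTH_CODE [PProj 0]; PProj 0; PProj 1; PProj 2].
Lemma eval_FIND_ENTRY l : eval FIND_ENTRY l (find_entry (nth 0 l 0) (nth 1 l 0) (nth 2 l 0)).
Proof. eval_prog. Qed.
#[export] Hint Resolve eval_FIND_ENTRY : eval_db.
Definition UNIV_SEARCH := PComp NSG [CERT_FOR].
Definition UNIV_READ := PComp ENTRY_OUT [PComp NTH_CODE [FIND_ENTRY; PProj 0]].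
Definition UNIV := PComp UNIV_READ [PComp (PMu UNIV_SEARCH) [PProj 0; PProj 1]; PProj 0; PProj 1].

Definition HasEntry Js c a y := exists E, In E Js /\ nfst E = c /\ entry_in E = a /\ entry_out E = y.
Definition HasNzEntry Js c a := exists E, In E Js /\ nfst E = c /\ entry_in E = a /\ entry_out E <> 0.

Lemma has_entry_spec Js c a y : has_entry (list_code Js) c a y <> 0 <-> HasEntry Js c a y.
Proof.
  unfold has_entry, HasEntry. rewrite sg_neq0, bsum_neq0, length_code_list_code. split.
  - intros [m [hm H]]. rewrite !mul_neq0, !b2n_eqb_neq0 in H. destruct H as [[? ?] ?].
    exists (nth_code m (list_code Js)). split; auto. apply nth_code_In; auto.
  - intros [E [HI [h1 [h2 h3]]]]. destruct (In_nth _ _ 0 HI) as [m [hm hE]].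
    exists m. split; auto. rewrite nth_code_list_code, hE, !mul_neq0, !b2n_eqb_neq0. auto.
Qed.
Lemma has_nz_entry_spec Js c a : has_nz_entry (list_code Js) c a <> 0 <-> HasNzEntry Js c a.
Proof.
  unfold has_nz_entry, HasNzEntry. rewrite sg_neq0, bsum_neq0, length_code_list_code. split.
  - intros [m [hm H]]. rewrite !mul_neq0, !b2n_eqb_neq0, nsg_neq0 in H. destruct H as [[? ?] ?].
    exists (nth_code m (list_code Js)). split. apply nth_code_In; auto. repeat split; auto.
    destruct (Nat.eqb_spec (entry_out (nth_code m (list_code Js))) 0); simpl in *; auto; congruence.
  - intros [E [HI [h1 [h2 h3]]]]. destruct (In_nth _ _ 0 HI) as [m [hm hE]].
    exists m. split; auto. rewrite nth_code_list_code, hE, !mul_neq0, !b2n_eqb_neq0, nsg_neq0. repeat split; auto.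
    destruct (Nat.eqb_spec (entry_out E) 0); simpl; auto; congruence.
Qed.
Lemma has_entry_le_1 J c a y : has_entry J c a y <= 1. Proof. apply sg_le_1. Qed.
Lemma has_nz_entry_le_1 J c a : has_nz_entry J c a <= 1. Proof. apply sg_le_1. Qed.

Definition Justified Js E :=
  let c := nfst E in let t := nfst c in let pl := nsnd c in
  let a := entry_in E in let y := entry_out E in let w := entry_aux E in
  c <> 0 /\
 ( (t = 0 /\ pl = 0 /\ y = 0)
 \/ (t = 1 /\ pl = 0 /\ a <> 0 /\ y = S (nfst a))
 \/ (t = 2 /\ y = nth_code pl a)
 \/ (t = 3 /\ pl <> 0 /\ length_code w = length_code (nsnd pl) /\
       (forall k, k < length_code (nsnd pl) -> HasEntry Js (nth_code k (nsnd pl)) a (nth_code k w)) /\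
       HasEntry Js (nfst pl) w y)
 \/ (t = 4 /\ pl <> 0 /\ a <> 0 /\ (nfst a = 0 -> HasEntry Js (nfst pl) (nsnd a) y) /\
       (nfst a <> 0 -> HasEntry Js c (npair (pred (nfst a)) (nsnd a)) w /\
                       HasEntry Js (nsnd pl) (npair (pred (nfst a)) (npair w (nsnd a))) y))
 \/ (t = 5 /\ HasEntry Js pl (npair y a) 0 /\ (forall z, z < y -> HasNzEntry Js pl (npair z a)))).

Lemma justified_spec Js E : justified E (list_code Js) <> 0 <-> Justified Js E.
Proof.
  unfold justified, Justified, just_zero, just_succ, just_proj, just_comp, just_prec, just_mu,
    comp_args_entries, mu_below_entries, entry_tag, entry_body, entry_prog.
  rewrite mul_neq0, sg_neq0.
  apply and_iff_compat_l.
  destruct (nfst (nfst E)) as [|[|[|[|[|[|t]]]]]] eqn:Et; simpl Nat.b2n; simpl Nat.eqb;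
    rewrite ?Nat.mul_0_l, ?Nat.mul_1_l, ?Nat.add_0_l, ?Nat.add_0_r.
  - rewrite mul_neq0, !b2n_eqb_neq0. split. intros; left; tauto. intros [H|[H|[H|[H|[H|H]]]]]; try tauto; lia.
  - rewrite !mul_neq0, !b2n_eqb_neq0, sg_neq0. split. intros; right; left; tauto.
    intros [H|[H|[H|[H|[H|H]]]]]; try tauto; lia.
  - rewrite !b2n_eqb_neq0. split. intros; right; right; left; tauto.
    intros [H|[H|[H|[H|[H|H]]]]]; try tauto; lia.
  - rewrite !mul_neq0. rewrite bsum_01_full by (intros; apply has_entry_le_1).
    rewrite !b2n_eqb_neq0, sg_neq0, has_entry_spec.
    setoid_rewrite has_entry_spec.
    split. intros; right; right; right; left; tauto.
    intros [H|[H|[H|[H|[H|H]]]]]; try tauto; lia.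
  - rewrite !mul_neq0, !sg_neq0.
    split.
    + intros [[H1 H2] H3']. right; right; right; right; left.
      split; [reflexivity|]. split; [exact H1|]. split; [exact H2|]. split.
      * intros h. rewrite h in H3'. simpl in H3'. apply has_entry_spec; auto.
      * intros h. destruct (Nat.eqb_spec (nfst (entry_in E)) 0); try contradiction.
        rewrite mul_neq0, !has_entry_spec in H3'. tauto.
    + intros [H|[H|[H|[H|[H|H]]]]]; try lia.
      destruct H as [_ [H1 [H2 [H3' H4]]]]. split; [split; auto|].
      destruct (Nat.eqb_spec (nfst (entry_in E)) 0).
      * apply has_entry_spec; auto.
      * rewrite mul_neq0, !has_entry_spec. apply H4; auto.
  - rewrite !mul_neq0. rewrite bsum_01_full by (intros; apply has_nz_entry_le_1).
    rewrite has_entry_spec.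
    setoid_rewrite has_nz_entry_spec.
    split. intros; right; right; right; right; right; tauto.
    intros [H|[H|[H|[H|[H|H]]]]]; try tauto; lia.
  - split. intros H; lia. intros [H|[H|[H|[H|[H|H]]]]]; lia.
Qed.

Definition ValidCert Js := forall E, In E Js -> Justified Js E.
Lemma valid_cert_spec Js : valid_cert (list_code Js) <> 0 <-> ValidCert Js.
Proof.
  unfold valid_cert, ValidCert. rewrite bsum_01_full by (intros; apply sg_le_1). rewrite length_code_list_code.
  split.
  - intros H E HI. destruct (In_nth _ _ 0 HI) as [m [hm hE]]. specialize (H m hm).
    rewrite sg_neq0, nth_code_list_code, hE, justified_spec in H. auto.
  - intros H m hm. rewrite sg_neq0, nth_code_list_code, justified_spec. apply H. apply nth_In; auto.
Qed.

Definition mk_entry c a y w := npair c (npair a (npair y w)).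
Lemma mk_entry_prog c a y w : nfst (mk_entry c a y w) = c. Proof. unfold mk_entry. apply nfst_npair. Qed.
Lemma mk_entry_in c a y w : entry_in (mk_entry c a y w) = a.
Proof. unfold mk_entry, entry_in. rewrite nsnd_npair, nfst_npair; auto. Qed.
Lemma mk_entry_out c a y w : entry_out (mk_entry c a y w) = y.
Proof. unfold mk_entry, entry_out. rewrite !nsnd_npair, nfst_npair; auto. Qed.
Lemma mk_entry_aux c a y w : entry_aux (mk_entry c a y w) = w.
Proof. unfold mk_entry, entry_aux. rewrite !nsnd_npair; auto. Qed.

Lemma nth_map_code gs k : k < length gs -> nth k (map code gs) 0 = code (nth k gs PZero).
Proof. intros hk. rewrite (nth_indep _ _ (code PZero)) by (rewrite length_map; auto). apply map_nth. Qed.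

Definition RuleHolds Js p a y w : Prop :=
  match p with
  | PZero => y = 0
  | PSucc => a <> 0 /\ y = S (nfst a)
  | PProj i => y = nth_code i a
  | PComp f gs =>
      length_code w = length gs /\
      (forall k, k < length gs -> HasEntry Js (code (nth k gs PZero)) a (nth_code k w)) /\
      HasEntry Js (code f) w y
  | PPrec f g =>
      a <> 0 /\ (nfst a = 0 -> HasEntry Js (code f) (nsnd a) y) /\
      (nfst a <> 0 -> HasEntry Js (code (PPrec f g)) (npair (pred (nfst a)) (nsnd a)) w /\
                      HasEntry Js (code g) (npair (pred (nfst a)) (npair w (nsnd a))) y)
  | PMu f =>
      HasEntry Js (code f) (npair y a) 0 /\ (forall z, z < y -> HasNzEntry Js (code f) (npair z a))
  end.

Lemma Justified_RuleHolds Js p E : nfst E = code p ->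
  Justified Js E <-> RuleHolds Js p (entry_in E) (entry_out E) (entry_aux E).
Proof.
  intros Hc. unfold Justified; cbv zeta. rewrite Hc.
  destruct p as [| |i|f gs|f g|f]; cbn [RuleHolds];
    rewrite ?code_zero, ?code_succ, ?code_proj, ?code_comp, ?code_prec, ?code_mu, !nfst_npair, !nsnd_npair;
    (split; [intros [_ H]; destruct H as [H|[H|[H|[H|[H|H]]]]]; try lia
            | intros H; split; [apply npair_neq0|]]).
  - left; auto.
  - right; left; repeat split; tauto.
  - right; right; left; auto.
  - rewrite nfst_npair, length_code_list_code, length_map in H.
    destruct H as [_ [_ [Hlen [Hargs Hf]]]]. repeat split; auto.
    intros k hk. rewrite <- nth_map_code, <- nth_code_list_code by auto. apply Hargs; auto.
  - right; right; right; left. rewrite nfst_npair, length_code_list_code, length_map.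
    destruct H as [Hlen [Hargs Hf]]. repeat split; auto using npair_neq0.
    intros k hk. rewrite nth_code_list_code, nth_map_code by auto. apply Hargs; auto.
  - rewrite nfst_npair in H. tauto.
  - right; right; right; right; left. rewrite nfst_npair. repeat split; try tauto; apply npair_neq0.
  - tauto.
  - right; right; right; right; right. tauto.
Qed.

Lemma list_code_neq0 l : list_code l <> 0 -> exists x r, l = x :: r.
Proof. destruct l; simpl. intros H; contradiction. eauto. Qed.

Lemma Forall2_nth_intro {A B} (R : A -> B -> Prop) (l1 : list A) (l2 : list B) d1 d2 :
  length l1 = length l2 -> (forall k, k < length l1 -> R (nth k l1 d1) (nth k l2 d2)) -> Forall2 R l1 l2.
Proof.
  revert l2; induction l1; intros l2 Hl H; destruct l2; simpl in *; try discriminate; constructor.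
  - apply (H 0); lia.
  - apply IHl1; auto. intros k hk. apply (H (S k)); lia.
Qed.

Lemma ValidCert_sound Js : ValidCert Js ->
  forall p E, In E Js -> nfst E = code p ->
  forall la, list_code la = entry_in E -> eval p la (entry_out E).
Proof.
  intros HV p. induction p using prog_ind_nested; intros E HI Hc la Ha;
    pose proof (proj1 (Justified_RuleHolds Js _ E Hc) (HV E HI)) as HR; cbn [RuleHolds] in HR;
    try rewrite <- Ha in HR.
  - rewrite HR. constructor.
  - destruct HR as [Hne ->]. destruct (list_code_neq0 la Hne) as [x [r ->]].
    cbn [list_code]. rewrite nfst_npair. constructor.
  - rewrite HR, nth_code_list_code. constructor.
  - destruct HR as [Hlen [Hargs [Ef [HIf [Hcf [Haf Hyf]]]]]].
    destruct (list_code_surj (entry_aux E)) as [lw Hlw]. rewrite <- Hlw in *.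
    rewrite length_code_list_code in Hlen.
    apply (ev_comp _ _ _ lw).
    + apply Forall2_nth_intro with (d1 := PZero) (d2 := 0); auto.
      intros k hk. destruct (Hargs k hk) as [Ek [HIk [Hck [Hak Hyk]]]].
      rewrite nth_code_list_code in Hyk. rewrite <- Hyk.
      rewrite Forall_forall in H. apply (H (nth k gs PZero)); auto using nth_In.
    + rewrite <- Hyf. apply (IHp Ef); auto.
  - assert (Hprec : forall x E, In E Js -> nfst E = code (PPrec p1 p2) ->
              forall rest, list_code (x :: rest) = entry_in E -> eval (PPrec p1 p2) (x :: rest) (entry_out E)).
    { clear E HI Hc la Ha HR. induction x; intros E HI Hc rest Ha;
        pose proof (proj1 (Justified_RuleHolds Js _ E Hc) (HV E HI)) as HR; cbn [RuleHolds] in HR;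
        rewrite <- Ha in HR; cbn [list_code] in HR; rewrite nfst_npair, nsnd_npair in HR;
        destruct HR as [_ [H0 HS]].
      - destruct (H0 eq_refl) as [Ef [HIf [Hcf [Haf Hyf]]]].
        constructor. rewrite <- Hyf. apply (IHp1 Ef); auto.
      - destruct (HS ltac:(lia)) as [[E1 [HI1 [Hc1 [Ha1 Hy1]]]] [E2 [HI2 [Hc2 [Ha2 Hy2]]]]].
        econstructor.
        + apply (IHx E1); auto.
        + rewrite <- Hy2, Hy1. apply (IHp2 E2); auto. }
    destruct HR as [Hne _]. destruct (list_code_neq0 la Hne) as [x [r ->]]. apply (Hprec x E); auto.
  - destruct HR as [[Ef [HIf [Hcf [Haf Hyf]]]] Hbelow].
    constructor.
    + rewrite <- Hyf. apply (IHp Ef); auto.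
    + intros z hz. destruct (Hbelow z hz) as [Ez [HIz [Hcz [Haz Hyz]]]].
      exists (entry_out Ez). split; auto.
Qed.

Lemma HasEntry_incl Js Js' c a y : incl Js Js' -> HasEntry Js c a y -> HasEntry Js' c a y.
Proof. intros Hi [E [HI H]]. exists E; split; auto. Qed.
Lemma HasNzEntry_incl Js Js' c a : incl Js Js' -> HasNzEntry Js c a -> HasNzEntry Js' c a.
Proof. intros Hi [E [HI H]]. exists E; split; auto. Qed.

Lemma Justified_incl Js Js' E : incl Js Js' -> Justified Js E -> Justified Js' E.
Proof.
  intros Hi. unfold Justified; cbv zeta. intros [Hc HJ]. split; auto.
  pose proof (HasEntry_incl Js Js') as HE. pose proof (HasNzEntry_incl Js Js') as HN.
  destruct HJ as [H|[H|[H|[H|[H|H]]]]].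
  - left; auto.
  - right; left; auto.
  - right; right; left; auto.
  - right; right; right; left. destruct H as [A [B [C [D F]]]]. repeat split; auto.
  - right; right; right; right; left. destruct H as [A [B [C [D F]]]].
    repeat split; auto; apply HE, F; auto.
  - right; right; right; right; right. destruct H as [A [B C]]. repeat split; auto.
Qed.

Lemma RuleHolds_incl Js Js' p a y w : incl Js Js' -> RuleHolds Js p a y w -> RuleHolds Js' p a y w.
Proof.
  intros Hi. pose proof (HasEntry_incl Js Js' ) as HE. pose proof (HasNzEntry_incl Js Js') as HN.
  destruct p; cbn [RuleHolds]; auto.
  - intros [A [B C]]. repeat split; auto.
  - intros [A [B C]]. repeat split; auto; apply HE, C; auto.
  - intros [A B]. split; auto.
Qed.

Lemma ValidCert_app A B : ValidCert A -> ValidCert B -> ValidCert (A ++ B).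
Proof.
  intros HA HB E HI. apply in_app_or in HI. destruct HI as [HI|HI].
  - apply (Justified_incl A); auto. apply incl_appl, incl_refl.
  - apply (Justified_incl B); auto. apply incl_appr, incl_refl.
Qed.

Definition Certified c a y := exists Js, ValidCert Js /\ HasEntry Js c a y.

Lemma certify_step Js p a y w : ValidCert Js -> RuleHolds Js p a y w -> Certified (code p) a y.
Proof.
  intros HV HR. set (E := mk_entry (code p) a y w). exists (E :: Js). split.
  - intros E' [<-|HI].
    + apply (Justified_RuleHolds _ p E (mk_entry_prog _ _ _ _)).
      unfold E; rewrite mk_entry_in, mk_entry_out, mk_entry_aux.
      apply (RuleHolds_incl Js); auto. intros z hz; right; auto.
    + apply (Justified_incl Js); auto. intros z hz; right; auto.
  - exists E. unfold E. rewrite mk_entry_prog, mk_entry_in, mk_entry_out. split; auto. left; auto.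
Qed.

Lemma certify_list args gs ys :
  Forall2 (fun g v => eval g args v /\ Certified (code g) (list_code args) v) gs ys ->
  exists Js, ValidCert Js /\
    forall k, k < length gs -> HasEntry Js (code (nth k gs PZero)) (list_code args) (nth k ys 0).
Proof.
  induction 1 as [|g v gs ys [_ [J1 [HV1 H1]]] _ [Jg [HVg Hg]]].
  - exists []. split. intros E []. intros k hk; simpl in hk; lia.
  - exists (J1 ++ Jg). split. apply ValidCert_app; auto.
    intros [|k] hk; simpl.
    + apply (HasEntry_incl J1); auto. apply incl_appl, incl_refl.
    + apply (HasEntry_incl Jg). apply incl_appr, incl_refl. apply Hg. simpl in hk; lia.
Qed.

Lemma certify_below c a y :
  (forall z, z < y -> exists Js, ValidCert Js /\ HasNzEntry Js c (npair z a)) ->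
  exists Js, ValidCert Js /\ forall z, z < y -> HasNzEntry Js c (npair z a).
Proof.
  induction y; intros H.
  - exists []. split. intros E []. intros; lia.
  - destruct IHy as [J1 [HV1 H1]]. intros z hz; apply H; lia.
    destruct (H y ltac:(lia)) as [J2 [HV2 H2]]. exists (J1 ++ J2). split. apply ValidCert_app; auto.
    intros z hz. destruct (Nat.eq_dec z y) as [->|].
    + apply (HasNzEntry_incl J2); auto. apply incl_appr, incl_refl.
    + apply (HasNzEntry_incl J1); auto. apply incl_appl, incl_refl. apply H1; lia.
Qed.

Lemma eval_certified : forall p la y, eval p la y -> Certified (code p) (list_code la) y.
Proof.
  apply (eval_ind_nested (fun p la y => Certified (code p) (list_code la) y)).
  - intros args. apply (certify_step [] _ _ _ 0). intros E []. reflexivity.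
  - intros x args. apply (certify_step [] _ _ _ 0). intros E [].
    cbn [list_code RuleHolds]. rewrite nfst_npair. split; auto using npair_neq0.
  - intros i args. apply (certify_step [] _ _ _ 0). intros E [].
    cbn [RuleHolds]. rewrite nth_code_list_code. reflexivity.
  - intros f gs args ys y HF Hf [Jf [HVf Hyf]].
    destruct (certify_list _ _ _ HF) as [Jg [HVg Hg]].
    apply (certify_step (Jf ++ Jg) _ _ _ (list_code ys)). apply ValidCert_app; auto.
    cbn [RuleHolds]. rewrite length_code_list_code. repeat split.
    + symmetry; apply (Forall2_length HF).
    + intros k hk. rewrite nth_code_list_code. apply (HasEntry_incl Jg); auto. apply incl_appr, incl_refl.
    + apply (HasEntry_incl Jf); auto. apply incl_appl, incl_refl.
  - intros f g args y Hf [J [HV Hy]].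
    apply (certify_step J _ _ _ 0); auto. cbn [list_code RuleHolds].
    rewrite nfst_npair, nsnd_npair.
    split; [apply npair_neq0 | split; [auto | intros h; lia]].
  - intros f g x args r y _ [J1 [HV1 Hr]] _ [J2 [HV2 Hy]].
    apply (certify_step (J1 ++ J2) _ _ _ r). apply ValidCert_app; auto.
    cbn [list_code RuleHolds]. rewrite nfst_npair, nsnd_npair.
    split; [apply npair_neq0 | split; [intros h; lia | intros _; split]].
    + apply (HasEntry_incl J1); auto. apply incl_appl, incl_refl.
    + apply (HasEntry_incl J2); auto. apply incl_appr, incl_refl.
  - intros f args y _ [J0 [HV0 Hy]] Hlt.
    destruct (certify_below (code f) (list_code args) y) as [Jm [HVm Hm]].
    { intros z hz. destruct (Hlt z hz) as [v [hv [_ [Jz [HVz [Ez [HIz [Hcz [Haz Hvz]]]]]]]]].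
      exists Jz. split; auto. exists Ez. repeat split; auto. congruence. }
    apply (certify_step (J0 ++ Jm) _ _ _ 0). apply ValidCert_app; auto.
    cbn [RuleHolds]. split.
    + apply (HasEntry_incl J0); auto. apply incl_appl, incl_refl.
    + intros z hz. apply (HasNzEntry_incl Jm); auto. apply incl_appr, incl_refl.
Qed.

Lemma eval_UNIV_SEARCH l : eval UNIV_SEARCH l (nsg (cert_for (nth 0 l 0) (nth 1 l 0) (nth 2 l 0))).
Proof. unfold UNIV_SEARCH. eval_prog. Qed.
Lemma eval_UNIV_READ l :
  eval UNIV_READ l (entry_out (nth_code (find_entry (nth 0 l 0) (nth 1 l 0) (nth 2 l 0)) (nth 0 l 0))).
Proof. unfold UNIV_READ. eval_prog. Qed.

Lemma least_witness (Q : nat -> Prop) :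
  (forall n, Q n \/ ~ Q n) -> (exists n, Q n) -> exists n, Q n /\ forall m, m < n -> ~ Q m.
Proof.
  intros D HQ. destruct (dec_inh_nat_subset_has_unique_least_element Q D HQ) as [n [[Hn Hmin] _]].
  exists n. split; auto. intros m hm Hm. specialize (Hmin m Hm). lia.
Qed.

Lemma cert_for_spec Js c x :
  cert_for (list_code Js) c x <> 0 <-> ValidCert Js /\ exists E, In E Js /\ nfst E = c /\ entry_in E = npair x 0.
Proof.
  unfold cert_for. rewrite mul_neq0, valid_cert_spec, sg_neq0, bsum_neq0, length_code_list_code.
  apply and_iff_compat_l. split.
  - intros [m [hm H]]. unfold entry_matches in H. rewrite mul_neq0, !b2n_eqb_neq0 in H.
    exists (nth_code m (list_code Js)).
    split; [apply nth_code_In; auto | tauto].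
  - intros [E [HI [h1 h2]]]. destruct (In_nth _ _ 0 HI) as [m [hm hE]]. exists m. split; auto.
    unfold entry_matches. rewrite nth_code_list_code, hE, mul_neq0, !b2n_eqb_neq0. auto.
Qed.

Lemma find_entry_spec J c x : cert_for J c x <> 0 ->
  find_entry J c x < length_code J /\ entry_matches J c x (find_entry J c x) <> 0.
Proof.
  intros H. unfold cert_for in H. rewrite mul_neq0, sg_neq0, bsum_neq0 in H. destruct H as [_ [m [hm H]]].
  unfold find_entry. destruct (bmin_spec (entry_matches J c x) (length_code J)) as [[A [B C]]|[A B]]. auto.
  exfalso. apply H, B; auto.
Qed.

Lemma phi_functional c x y y' : phi c x y -> phi c x y' -> y = y'.
Proof.
  intros [p [Hp H]] [q [Hq H']]. rewrite <- Hq in Hp. apply code_inj in Hp. subst. eapply eval_functional; eauto.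
Qed.

Lemma eval_found_entry J c x p : cert_for J c x <> 0 -> code p = c ->
  eval p [x] (entry_out (nth_code (find_entry J c x) J)).
Proof.
  intros H Hc. destruct (list_code_surj J) as [Js <-]. destruct (find_entry_spec _ _ _ H) as [h1 h2].
  apply cert_for_spec in H. destruct H as [HV _]. rewrite length_code_list_code in h1.
  unfold entry_matches in h2. rewrite mul_neq0, !b2n_eqb_neq0 in h2. destruct h2 as [h2 h3].
  apply (ValidCert_sound Js HV p). apply nth_code_In; auto. congruence. rewrite h3. reflexivity.
Qed.

Lemma eval_UNIV_complete c x y rest : phi c x y -> eval UNIV (c :: x :: rest) y.
Proof.
  intros [p [Hc Hev]].
  destruct (eval_certified _ _ _ Hev) as [Js [HV [E [HI [HcE [HaE _]]]]]].
  destruct (least_witness (fun J => cert_for J c x <> 0)) as [J0 [HJ0 Hmin]].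
  { intros n. destruct (Nat.eq_dec (cert_for n c x) 0); auto. }
  { exists (list_code Js). apply cert_for_spec. split; auto.
    exists E. rewrite HaE. split; [exact HI | split; [congruence | reflexivity]]. }
  unfold UNIV. eapply eval_PComp.
  - constructor; [|constructor; [|constructor; [|constructor]]].
    + eapply eval_PComp. eval_solve. simpl. apply (eval_PMu_least _ _ (fun z => nsg (cert_for z c x)) J0).
      * intros z _. eapply eval_value. apply eval_UNIV_SEARCH. reflexivity.
      * destruct (cert_for J0 c x); simpl; auto; congruence.
      * intros z hz. specialize (Hmin z hz). destruct (cert_for z c x); simpl; auto.
    + constructor.
    + constructor.
  - eapply eval_value. apply eval_UNIV_READ. simpl.
    pose proof (eval_found_entry _ _ _ p HJ0 Hc). eapply eval_functional; eauto.
Qed.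

(** * Quoting programs and the s-m-n theorem *)

Definition PAIR a b := PComp NPAIR [a; b].
Fixpoint QUOTE (p : prog) : prog :=
  match p with
  | PZero => PAIR (CONST 0) (CONST 0)
  | PSucc => PAIR (CONST 1) (CONST 0)
  | PProj i => PAIR (CONST 2) (CONST i)
  | PComp f gs =>
      PAIR (CONST 3) (PAIR (QUOTE f)
        ((fix quote_list (l : list prog) : prog :=
            match l with [] => CONST 0 | g :: l' => PAIR (QUOTE g) (quote_list l') end) gs))
  | PPrec f g => PAIR (CONST 4) (PAIR (QUOTE f) (QUOTE g))
  | PMu f => PAIR (CONST 5) (QUOTE f)
  end.
Lemma eval_PAIR a b l x y : eval a l x -> eval b l y -> eval (PAIR a b) l (npair x y).
Proof. intros Ha Hb. apply (ev_comp _ _ _ [x; y]); [repeat constructor; auto | apply eval_NPAIR]. Qed.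

Lemma eval_QUOTE p l : eval (QUOTE p) l (code p).
Proof.
  revert l. induction p using prog_ind_nested; intros l; cbn [QUOTE];
    rewrite ?code_comp, ?code_prec, ?code_mu; repeat apply eval_PAIR; auto using eval_CONST.
  induction H; cbn [map list_code]; [apply eval_CONST | apply eval_PAIR; auto].
Qed.

Definition CONST_CODE :=
  PREC1 (PAIR (CONST 0) (CONST 0))
        (PAIR (CONST 3) (PAIR (PAIR (CONST 1) (CONST 0)) (PAIR (PProj 1) (CONST 0)))).
Lemma eval_CONST_CODE l : eval CONST_CODE l (code (CONST (nth 0 l 0))).
Proof.
  apply (eval_PREC1 _ _ (fun x => code (CONST x))); intros;
    (eapply eval_value; [repeat apply eval_PAIR; eauto using eval_CONST, ev_proj|]).
  - reflexivity.
  - cbn [nth CONST]. rewrite code_comp. reflexivity.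
Qed.

Definition SMN f :=
  PAIR (CONST 3) (PAIR (QUOTE f) (PAIR CONST_CODE (PAIR (PAIR (CONST 2) (CONST 0)) (CONST 0)))).
Lemma eval_SMN f l : eval (SMN f) l (code (PComp f [CONST (nth 0 l 0); PProj 0])).
Proof.
  unfold SMN. eapply eval_value.
  - repeat apply eval_PAIR; eauto using eval_CONST, eval_QUOTE, eval_CONST_CODE.
  - rewrite code_comp. cbn [map list_code]. rewrite code_proj. reflexivity.
Qed.

Lemma phi_SMN f n x y : phi (code (PComp f [CONST n; PProj 0])) x y <-> eval f [n; x] y.
Proof.
  assert (Hargs : Forall2 (fun g v => eval g [x] v) [CONST n; PProj 0] [n; x]) by eval_args.
  split.
  - intros [p [Hc Hev]]. apply code_inj in Hc. subst p. apply (eval_PComp_iff _ _ _ _ _ Hargs), Hev.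
  - intros H. exists (PComp f [CONST n; PProj 0]). split; [reflexivity|]. apply (eval_PComp_iff _ _ _ _ _ Hargs), H.
Qed.

Definition MEMBER := PMu (PComp NSG [PComp TB [PProj 1; PProj 2]]).
Definition finset_index D := code (PComp MEMBER [CONST D; PProj 0]).
Definition FINSET_INDEX := SMN MEMBER.
Lemma eval_FINSET_INDEX l : eval FINSET_INDEX l (finset_index (nth 0 l 0)).
Proof. apply eval_SMN. Qed.
#[export] Hint Resolve eval_FINSET_INDEX : eval_db.

Lemma W_finset_index D y : W (finset_index D) y <-> Nat.testbit D y = true.
Proof.
  assert (Htest : forall v, eval (PComp NSG [PComp TB [PProj 1; PProj 2]]) [v; D; y]
                              (nsg (Nat.b2n (Nat.testbit D y))))
    by (intros v; eapply eval_value; [eval_solve | reflexivity]).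
  unfold W, finset_index. setoid_rewrite phi_SMN. split.
  - intros [v Hv]. apply eval_PMu_inv in Hv as [H0 _].
    pose proof (eval_functional _ _ _ H0 _ (Htest v)) as E.
    destruct (Nat.testbit D y); simpl in E; auto; discriminate.
  - intros Hb. exists 0. apply (eval_PMu_least _ _ (fun _ => nsg (Nat.b2n (Nat.testbit D y)))).
    + intros z _. apply Htest.
    + rewrite Hb; reflexivity.
    + intros; lia.
Qed.

(** * Finite sets as bit vectors *)

Lemma testbit_lt_pow2 D x : D < 2 ^ x -> Nat.testbit D x = false.
Proof. intros H. apply Nat.testbit_false. rewrite Nat.div_small; auto. Qed.
Lemma testbit_ge D x : D <= x -> Nat.testbit D x = false.
Proof. intros H. apply testbit_lt_pow2. pose proof (Nat.pow_gt_lin_r 2 x ltac:(lia)). lia. Qed.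
Lemma testbit_add_pow2 D x y :
  Nat.testbit D x = false -> Nat.testbit (D + 2 ^ x) y = (Nat.testbit D y || (x =? y))%bool.
Proof.
  intros H. rewrite Nat.add_nocarry_lxor.
  - rewrite Nat.lxor_spec, Nat.pow2_bits_eqb. destruct (Nat.eqb_spec x y); subst.
    rewrite H; auto. destruct (Nat.testbit D y); auto.
  - apply Nat.bits_inj_0. intros n. rewrite Nat.land_spec, Nat.pow2_bits_eqb.
    destruct (Nat.eqb_spec x n); subst. rewrite H; auto. destruct (Nat.testbit D n); auto.
Qed.
Lemma lor_pow2 D x : Nat.testbit D x = false -> Nat.lor D (2 ^ x) = D + 2 ^ x.
Proof. intros H. apply Nat.bits_inj. intros n. rewrite Nat.lor_spec, testbit_add_pow2, Nat.pow2_bits_eqb; auto. Qed.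
Lemma testbit_neq0 D : D <> 0 -> exists x, x < S D /\ Nat.testbit D x = true.
Proof.
  intros H. destruct (classic (exists x, Nat.testbit D x = true)) as [[x Hx]|Hn].
  - exists x. split; auto. destruct (Nat.le_gt_cases D x); try lia. rewrite testbit_ge in Hx; auto; discriminate.
  - exfalso. apply H, Nat.bits_inj_0. intros n. destruct (Nat.testbit D n) eqn:E; auto. exfalso; apply Hn; eauto.
Qed.

Definition min_elem D := bmin (fun x => Nat.b2n (Nat.testbit D x)) (S D).
Definition popcount D := bsum (fun x => Nat.b2n (Nat.testbit D x)) (S D).
Lemma testbit_min_elem D : D <> 0 -> Nat.testbit D (min_elem D) = true.
Proof.
  intros H. destruct (testbit_neq0 D H) as [x [hx Hx]]. unfold min_elem.
  destruct (bmin_spec (fun x => Nat.b2n (Nat.testbit D x)) (S D)) as [[A [B C]]|[A B]].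
  - destruct (Nat.testbit D (bmin (fun x => Nat.b2n (Nat.testbit D x)) (S D))); auto.
  - exfalso. specialize (B x hx). rewrite Hx in B. simpl in B. lia.
Qed.
Lemma bsum_testbit D N : S D <= N -> bsum (fun x => Nat.b2n (Nat.testbit D x)) N = popcount D.
Proof.
  intros H. unfold popcount. induction N. lia. destruct (Nat.eq_dec (S D) (S N)).
  rewrite e; auto. simpl. rewrite IHN by lia. rewrite testbit_ge by lia. simpl; lia.
Qed.
Lemma bsum_mono F G N : (forall x, F x <= G x) -> bsum F N <= bsum G N.
Proof. intros H; induction N; simpl; auto. specialize (H N); lia. Qed.
Lemma popcount_mono A B : (forall x, Nat.testbit A x = true -> Nat.testbit B x = true) -> popcount A <= popcount B.
Proof.
  intros H. rewrite <- (bsum_testbit A (S A + S B)) by lia. rewrite <- (bsum_testbit B (S A + S B)) by lia.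
  apply bsum_mono. intros x. specialize (H x). destruct (Nat.testbit A x); destruct (Nat.testbit B x); simpl; auto.
  specialize (H eq_refl); discriminate.
Qed.
Lemma bsum_testbit_add_pow2 D x N : Nat.testbit D x = false ->
  bsum (fun y => Nat.b2n (Nat.testbit (D + 2 ^ x) y)) N
  = bsum (fun y => Nat.b2n (Nat.testbit D y)) N + Nat.b2n (x <? N).
Proof.
  intros H. induction N; simpl. auto. rewrite IHN, testbit_add_pow2 by auto.
  destruct (Nat.eqb_spec x N).
  - subst. rewrite H. simpl. destruct (Nat.ltb_spec N N); destruct (Nat.ltb_spec N (S N)); simpl; lia.
  - destruct (Nat.ltb_spec x N); destruct (Nat.ltb_spec x (S N)); try lia; destruct (Nat.testbit D N); simpl; lia.
Qed.
Lemma popcount_add_pow2 D x : Nat.testbit D x = false -> popcount (D + 2 ^ x) = S (popcount D).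
Proof.
  intros H. set (N := S (D + 2 ^ x)). pose proof (Nat.pow_gt_lin_r 2 x ltac:(lia)).
  rewrite <- (bsum_testbit (D + 2 ^ x) N) by lia. rewrite <- (bsum_testbit D N) by (unfold N; lia).
  rewrite bsum_testbit_add_pow2 by auto. destruct (Nat.ltb_spec x N). simpl; lia. unfold N in *; lia.
Qed.

Lemma testbit_content_code T i y : Nat.testbit (content_code T i) y = true <-> exists j, j < i /\ T j = Some y.
Proof.
  induction i; simpl.
  - rewrite Nat.bits_0. split. discriminate. intros [j [h _]]; lia.
  - destruct (T i) as [x|] eqn:E.
    + rewrite Nat.lor_spec, Nat.pow2_bits_eqb, Bool.orb_true_iff, IHi. split.
      * intros [[j [h1 h2]]|h]. exists j; split; auto; lia. apply Nat.eqb_eq in h. subst. exists i; auto.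
      * intros [j [h1 h2]]. destruct (Nat.eq_dec j i). subst. right. rewrite E in h2. injection h2; intros; subst.
        apply Nat.eqb_refl. left. exists j; split; auto; lia.
    + rewrite IHi. split. intros [j [h1 h2]]; exists j; split; auto; lia.
      intros [j [h1 h2]]. destruct (Nat.eq_dec j i). subst; congruence. exists j; split; auto; lia.
Qed.
Lemma content_code_sub L T i y : Txt L T -> Nat.testbit (content_code T i) y = true -> L y.
Proof. intros HT H. apply testbit_content_code in H. destruct H as [j [_ Hj]]. apply HT. exists j; auto. Qed.
Lemma content_code_eventually L T B : Txt L T -> (forall y, L y <-> Nat.testbit B y = true) ->
  exists n0, forall n, n0 <= n -> content_code T n = B.
Proof.
  intros HT HB.
  assert (forall N, exists n0, forall y, y < N -> Nat.testbit B y = true -> exists j, j < n0 /\ T j = Some y) as A.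
  { induction N. exists 0; intros; lia. destruct IHN as [n0 Hn0].
    destruct (Nat.testbit B N) eqn:E.
    - assert (content T N) as [j Hj] by (apply HT, HB; auto). exists (S (max n0 j)). intros y hy Hy.
      destruct (Nat.eq_dec y N). subst. exists j; split; auto; lia.
      destruct (Hn0 y ltac:(lia) Hy) as [j' [h1 h2]]. exists j'; split; auto; lia.
    - exists n0. intros y hy Hy. destruct (Nat.eq_dec y N). subst; congruence. apply Hn0; auto; lia. }
  destruct (A (S B)) as [n0 Hn0]. exists n0. intros n hn. apply Nat.bits_inj. intros y.
  destruct (Nat.testbit B y) eqn:E.
  - apply testbit_content_code. destruct (Nat.le_gt_cases (S B) y). rewrite testbit_ge in E by lia. discriminate.
    destruct (Hn0 y H E) as [j [h1 h2]]. exists j; split; auto; lia.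
  - destruct (Nat.testbit (content_code T n) y) eqn:E2; auto. apply (content_code_sub L) in E2; auto.
    apply HB in E2. congruence.
Qed.

Definition bits_text B : text := fun n => if Nat.testbit B n then Some n else None.
Lemma bits_text_Txt B : Txt (fun y => Nat.testbit B y = true) (bits_text B).
Proof.
  intros x. unfold content, bits_text. split.
  - intros [n Hn]. destruct (Nat.testbit B n) eqn:E; try discriminate. injection Hn; intros; subst; auto.
  - intros H. exists x. rewrite H. auto.
Qed.

Definition MIN_ELEM := PComp (BMIN 1 (PComp TB [PProj 2; PProj 0])) [SUC; PProj 0].
Lemma eval_MIN_ELEM l : eval MIN_ELEM l (min_elem (nth 0 l 0)).
Proof. unfold MIN_ELEM. eval_prog. Qed.
#[export] Hint Resolve eval_MIN_ELEM : eval_db.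
Definition POPCOUNT := PComp (BSUM 1 (PComp TB [PProj 2; PProj 0])) [SUC; PProj 0].
Lemma eval_POPCOUNT l : eval POPCOUNT l (popcount (nth 0 l 0)).
Proof. unfold POPCOUNT. eval_prog. Qed.
#[export] Hint Resolve eval_POPCOUNT : eval_db.

(** * Diagonalising against a total learner *)

Definition TRIPLE := PAIR (PProj 0) (PAIR (PProj 1) (PProj 2)).
Lemma eval_TRIPLE l : eval TRIPLE l (npair (nth 0 l 0) (npair (nth 1 l 0) (nth 2 l 0))).
Proof. unfold TRIPLE, PAIR. eval_prog. Qed.
#[export] Hint Resolve eval_TRIPLE : eval_db.

Definition SEARCH_TEST :=
  EQ (PComp UNIV [PProj 1; PComp ADD [PProj 3; PComp POW2 [PComp TRIPLE [PProj 1; PProj 2; PProj 0]]]])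
     (PComp UNIV [PProj 1; PProj 3]).
Definition SEARCH := PMu SEARCH_TEST.
Definition STEP :=
  PComp ADD [PProj 1; PComp POW2 [PComp TRIPLE [PProj 2; PProj 0; PComp SEARCH [PProj 2; PProj 0; PProj 1]]]].
Definition STAGES := PREC2 PZero STEP.

Definition elem_stage y := nfst (nsnd y).
Definition ELEM_STAGE := PComp NFST [PComp NSND [PProj 2]].
Lemma eval_ELEM_STAGE l : eval ELEM_STAGE l (elem_stage (nth 2 l 0)).
Proof. unfold ELEM_STAGE. eval_prog. Qed.
#[export] Hint Resolve eval_ELEM_STAGE : eval_db.

Definition ENUM_TEST :=
  PComp NSG [EQ (PProj 2) (PComp TRIPLE [PProj 1; ELEM_STAGE;
                 PComp SEARCH [PProj 1; ELEM_STAGE; PComp STAGES [ELEM_STAGE; PProj 1]]])].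
Definition ENUM := PMu ENUM_TEST.
Definition enum_index e := code (PComp ENUM [CONST e; PProj 0]).
Definition ENUM_INDEX := SMN ENUM.
Lemma eval_ENUM_INDEX l : eval ENUM_INDEX l (enum_index (nth 0 l 0)).
Proof. apply eval_SMN. Qed.
#[export] Hint Resolve eval_ENUM_INDEX : eval_db.

Definition is_ext D B e k := sg (bsum (fun j => Nat.b2n (D =? B + 2 ^ npair e (npair k j))) (S D)).
Definition EXT_TEST := EQ (PProj 2) (PComp ADD [PProj 3; PComp POW2 [PComp TRIPLE [PProj 4; PProj 5; PProj 0]]]).
Definition IS_EXT := PComp SG [PComp (BSUM 4 EXT_TEST) [SUC; PProj 0; PProj 1; PProj 2; PProj 3]].
Lemma eval_IS_EXT l : eval IS_EXT l (is_ext (nth 0 l 0) (nth 1 l 0) (nth 2 l 0) (nth 3 l 0)).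
Proof. unfold IS_EXT, EXT_TEST, EQ. eval_prog. Qed.
#[export] Hint Resolve eval_IS_EXT : eval_db.

(* On a content code [D <> 0], [LEARNER] reads a learner index [e] off the least element of [D],
   sets [k := popcount D - 1] and computes stage [k] of the construction against [e] (diverging if
   it is undefined).  It conjectures [D] itself if [D] is stage [k] plus one element [stage_elem k j]
   on which [e] keeps its guess, and the union of all stages otherwise. *)
Definition CODED_LEARNER := PComp NFST [PComp MIN_ELEM [PProj 2]].
Definition CODED_STAGE := PComp PRED [PComp POPCOUNT [PProj 2]].
Definition STAGE_SET := PComp STAGES [CODED_STAGE; CODED_LEARNER].
Definition EXTENDS_STAGE :=
  AND (EQ (PComp UNIV [CODED_LEARNER; PProj 2]) (PComp UNIV [CODED_LEARNER; STAGE_SET]))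
      (PComp IS_EXT [PProj 2; STAGE_SET; CODED_LEARNER; CODED_STAGE]).
Definition LEARNER_STEP :=
  PComp ITE [EXTENDS_STAGE; PComp FINSET_INDEX [PProj 2]; PComp ENUM_INDEX [CODED_LEARNER]].
Definition LEARNER := PComp (PPrec FINSET_INDEX LEARNER_STEP) [PComp SG [PProj 0]; PProj 0].

Lemma eval_CODED_LEARNER l : eval CODED_LEARNER l (nfst (min_elem (nth 2 l 0))).
Proof. unfold CODED_LEARNER. eval_prog. Qed.
Lemma eval_CODED_STAGE l : eval CODED_STAGE l (pred (popcount (nth 2 l 0))).
Proof. unfold CODED_STAGE. eval_prog. Qed.
#[export] Hint Resolve eval_CODED_STAGE : eval_db.

Lemma Ex_eventually p T c :
  (exists n0, forall n, n0 <= n -> p n = c) -> (forall x, W c x <-> content T x) -> Ex p T.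
Proof. intros [n0 Hn0] HW. exists n0. intros n hn. rewrite !Hn0 by lia. auto. Qed.

Section Diagonalisation.
Variable e : nat.
Variable fe : nat -> nat.
Hypothesis fe_spec : forall x, phi e x (fe x).

Lemma eval_UNIV_learner x rest : eval UNIV (e :: x :: rest) (fe x).
Proof. apply eval_UNIV_complete, fe_spec. Qed.
Local Hint Resolve eval_UNIV_learner : eval_db.

Lemma learner_guesses L T : TxtSdEx_learns e L -> Txt L T -> Ex (fun n => fe (content_code T n)) T.
Proof.
  intros H HT. destruct (H T HT) as [p [Hp [n0 Hn0]]].
  assert (Hpn : forall n, p n = fe (content_code T n)) by (intros n; eapply phi_functional; eauto).
  exists n0. intros n hn. rewrite <- !Hpn. auto.
Qed.

Definition stage_elem k j := npair e (npair k j).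
Definition has_change S k := exists j, fe (S + 2 ^ stage_elem k j) <> fe S.
Definition is_least_change S k j :=
  fe (S + 2 ^ stage_elem k j) <> fe S /\ forall j', j' < j -> fe (S + 2 ^ stage_elem k j') = fe S.
Definition least_change S k := epsilon (inhabits 0) (is_least_change S k).

Lemma least_change_spec S k : has_change S k -> is_least_change S k (least_change S k).
Proof.
  intros Hch. unfold least_change. apply epsilon_spec.
  destruct (least_witness (fun j => fe (S + 2 ^ stage_elem k j) <> fe S)) as [j [H1 H2]]; auto.
  - intros n; destruct (Nat.eq_dec (fe (S + 2 ^ stage_elem k n)) (fe S)); auto.
  - exists j. split; auto. intros j' hj'. specialize (H2 j' hj').
    destruct (Nat.eq_dec (fe (S + 2 ^ stage_elem k j')) (fe S)); auto; contradiction.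
Qed.
Lemma is_least_change_unique S k j j' : is_least_change S k j -> is_least_change S k j' -> j = j'.
Proof.
  intros [A B] [C D]. destruct (Nat.lt_trichotomy j j') as [h|[h|h]]; auto.
  - exfalso; apply A, D; auto.
  - exfalso; apply C, B; auto.
Qed.

(* Stage [k + 1] is meaningful only if [has_change (stage k) k]; otherwise [least_change] is an
   arbitrary value. *)
Fixpoint stage k :=
  match k with
  | 0 => 0
  | S k' => stage k' + 2 ^ stage_elem k' (least_change (stage k') k')
  end.
Definition stages_change k := forall i, i < k -> has_change (stage i) i.
Definition added i := stage_elem i (least_change (stage i) i).

Lemma eval_SEARCH_TEST j k S rest :
  eval SEARCH_TEST (j :: e :: k :: S :: rest) (Nat.b2n (fe (S + 2 ^ stage_elem k j) =? fe S)).
Proof. unfold SEARCH_TEST, EQ. eval_prog. Qed.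

Lemma eval_SEARCH k S : has_change S k -> eval SEARCH [e; k; S] (least_change S k).
Proof.
  intros H. destruct (least_change_spec S k H) as [A B].
  apply (eval_PMu_least _ _ (fun j => Nat.b2n (fe (S + 2 ^ stage_elem k j) =? fe S))).
  - intros z _. apply eval_SEARCH_TEST.
  - destruct (Nat.eqb_spec (fe (S + 2 ^ stage_elem k (least_change S k))) (fe S)); auto; contradiction.
  - intros z hz. rewrite (B z hz), Nat.eqb_refl. simpl; lia.
Qed.

Lemma eval_SEARCH_inv k S j : eval SEARCH [e; k; S] j -> has_change S k /\ j = least_change S k.
Proof.
  intros H. apply eval_PMu_inv in H as [H0 H1].
  pose proof (eval_functional _ _ _ H0 _ (eval_SEARCH_TEST j k S [])) as E0.
  assert (HI : is_least_change S k j).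
  { split.
    - destruct (Nat.eqb_spec (fe (S + 2 ^ stage_elem k j)) (fe S)); simpl in E0; auto; discriminate.
    - intros j' hj'. destruct (H1 j' hj') as [v [hv Hv]].
      pose proof (eval_functional _ _ _ Hv _ (eval_SEARCH_TEST j' k S [])). subst v.
      destruct (Nat.eqb_spec (fe (S + 2 ^ stage_elem k j')) (fe S)); simpl in hv; auto; lia. }
  assert (Hch : has_change S k) by (exists j; apply HI).
  split; auto. apply (is_least_change_unique S k); auto. apply least_change_spec; auto.
Qed.

Lemma eval_STEP k S : has_change S k -> eval STEP [k; S; e] (S + 2 ^ stage_elem k (least_change S k)).
Proof. intros H. pose proof (eval_SEARCH k S H). unfold STEP. eval_prog. Qed.

Lemma eval_STEP_halts k S v : eval STEP [k; S; e] v -> has_change S k.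
Proof.
  intros H. unfold STEP in H. arg_halts H 1. arg_halts H 0. arg_halts H 2.
  rewrite (eval_PComp_iff _ _ _ [e; k; S]) in H by eval_args.
  apply eval_SEARCH_inv in H. tauto.
Qed.

Lemma eval_STAGES k : stages_change k -> eval STAGES [k; e] (stage k).
Proof.
  intros H. unfold STAGES, PREC2. eapply eval_PComp; [eval_args|].
  apply (eval_PPrec_upto _ _ _ stage k); [constructor| |lia].
  intros x hx. apply eval_STEP, H; auto.
Qed.

Lemma eval_STAGES_inv k S : eval STAGES [k; e] S -> stages_change k /\ S = stage k.
Proof.
  intros H. unfold STAGES, PREC2 in H. rewrite (eval_PComp_iff _ _ _ [k; e]) in H by eval_args.
  revert S H. induction k; intros S H.
  - apply eval_PPrec0_inv in H. inversion H; subst. split; auto. intros i hi; lia.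
  - apply eval_PPrecS_inv in H as [r [Hr Hs]]. apply IHk in Hr as [Hall ->].
    pose proof (eval_STEP_halts _ _ _ Hs) as Hch.
    split.
    + intros i hi. destruct (Nat.eq_dec i k) as [->|]; auto. apply Hall; lia.
    + eapply eval_functional; [exact Hs | apply eval_STEP; auto].
Qed.

Lemma eval_ENUM_TEST z y : stages_change (S (elem_stage y)) ->
  eval ENUM_TEST [z; e; y] (nsg (Nat.b2n (y =? added (elem_stage y)))).
Proof.
  intros Hall. set (k := elem_stage y).
  pose proof (eval_STAGES k ltac:(intros i hi; apply Hall; lia)).
  pose proof (eval_SEARCH k (stage k) ltac:(apply Hall; lia)).
  unfold ENUM_TEST, EQ. eval_prog.
Qed.

Lemma eval_ENUM_TEST_halts z y v : eval ENUM_TEST [z; e; y] v -> stages_change (S (elem_stage y)).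
Proof.
  intros H. unfold ENUM_TEST, EQ in H. arg_halts H 0. arg_halts H 1. arg_halts H 2.
  pose proof H as Hst. arg_halts Hst 2.
  rewrite (eval_PComp_iff _ _ _ [elem_stage y; e]) in Hst by eval_args.
  apply eval_STAGES_inv in Hst as [Hall ->].
  pose proof (eval_STAGES _ Hall).
  rewrite (eval_PComp_iff _ _ _ [e; elem_stage y; stage (elem_stage y)]) in H by eval_args.
  apply eval_SEARCH_inv in H as [Hch _].
  intros i hi. destruct (Nat.eq_dec i (elem_stage y)) as [->|]; auto. apply Hall; lia.
Qed.

Lemma W_enum_index y : W (enum_index e) y <-> stages_change (S (elem_stage y)) /\ y = added (elem_stage y).
Proof.
  unfold W, enum_index. setoid_rewrite phi_SMN. split.
  - intros [v Hv]. apply eval_PMu_inv in Hv as [H0 _].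
    pose proof (eval_ENUM_TEST_halts _ _ _ H0) as Hall. split; auto.
    pose proof (eval_functional _ _ _ H0 _ (eval_ENUM_TEST v y Hall)) as E.
    destruct (Nat.eqb_spec y (added (elem_stage y))); simpl in E; auto; discriminate.
  - intros [Hall Hy]. exists 0. apply (eval_PMu_least _ _ (fun _ => 0)); [|reflexivity|intros; lia].
    intros z _. eapply eval_value; [apply (eval_ENUM_TEST z y Hall)|].
    rewrite <- Hy, Nat.eqb_refl. reflexivity.
Qed.

Definition extends_stage D :=
  let k := pred (popcount D) in Nat.b2n (fe D =? fe (stage k)) * is_ext D (stage k) e k.
Definition guess D :=
  if D =? 0 then finset_index D else if extends_stage D =? 0 then enum_index e else finset_index D.
Definition well_coded D := nfst (min_elem D) = e /\ stages_change (pred (popcount D)).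

Lemma eval_LEARNER_STEP x r D : well_coded D ->
  eval LEARNER_STEP [x; r; D] (if extends_stage D =? 0 then enum_index e else finset_index D).
Proof.
  intros [He Hall].
  assert (eval CODED_LEARNER [x; r; D] e) by (rewrite <- He; apply eval_CODED_LEARNER).
  pose proof (eval_STAGES _ Hall).
  unfold LEARNER_STEP, EXTENDS_STAGE, STAGE_SET, AND, EQ. eval_prog.
Qed.

Lemma guess_neq0 D : D <> 0 -> guess D = if extends_stage D =? 0 then enum_index e else finset_index D.
Proof. intros H. unfold guess. destruct (Nat.eqb_spec D 0); [contradiction | reflexivity]. Qed.

Lemma eval_LEARNER D : (D <> 0 -> well_coded D) -> eval LEARNER [D] (guess D).
Proof.
  intros H. unfold LEARNER. eapply eval_PComp; [eval_args|]. cbn [nth]. destruct D as [|d].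
  - change (guess 0) with (finset_index 0). apply ev_prec0, (eval_FINSET_INDEX [0]).
  - rewrite guess_neq0 by lia.
    apply (ev_precS _ _ 0 [S d] (finset_index (S d))); [apply ev_prec0, (eval_FINSET_INDEX [S d])|].
    apply eval_LEARNER_STEP, H. lia.
Qed.

Lemma LEARNER_learns L :
  (forall D, D <> 0 -> (forall y, Nat.testbit D y = true -> L y) -> well_coded D) ->
  (forall T, Txt L T -> Ex (fun n => guess (content_code T n)) T) ->
  TxtSdEx_learns (code LEARNER) L.
Proof.
  intros Hcoded Hex T HT. exists (fun n => guess (content_code T n)). split; [|exact (Hex T HT)].
  intros i. exists LEARNER. split; [reflexivity|]. apply eval_LEARNER. intros Hd.
  apply Hcoded; auto. intros y Hy. exact (content_code_sub L T i y HT Hy).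
Qed.

Lemma nfst_stage_elem k j : nfst (stage_elem k j) = e.
Proof. apply nfst_npair. Qed.
Lemma elem_stage_stage_elem k j : elem_stage (stage_elem k j) = k.
Proof. unfold elem_stage, stage_elem. rewrite nsnd_npair, nfst_npair. auto. Qed.
Lemma stage_elem_inj k j k' j' : stage_elem k j = stage_elem k' j' -> k = k' /\ j = j'.
Proof. unfold stage_elem. intros H. apply npair_inj in H as [_ H]. apply npair_inj in H. auto. Qed.
Lemma stage_S k : stage (S k) = stage k + 2 ^ added k.
Proof. reflexivity. Qed.

Lemma testbit_stage k y : Nat.testbit (stage k) y = true <-> exists i, i < k /\ y = added i.
Proof.
  revert y. induction k; intros y.
  - simpl. rewrite Nat.bits_0. split; [discriminate | intros [i [h _]]; lia].
  - assert (Hnew : Nat.testbit (stage k) (added k) = false).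
    { destruct (Nat.testbit (stage k) (added k)) eqn:E; auto. apply IHk in E as [i [hi E]].
      apply stage_elem_inj in E. lia. }
    rewrite stage_S, testbit_add_pow2, Bool.orb_true_iff, IHk, Nat.eqb_eq by auto. split.
    + intros [[i [h1 h2]]|<-]; [exists i | exists k]; split; auto; lia.
    + intros [i [h1 h2]]. destruct (Nat.eq_dec i k) as [->|]; [right | left; exists i]; auto; lia.
Qed.
Lemma testbit_stage_new k j : Nat.testbit (stage k) (stage_elem k j) = false.
Proof.
  destruct (Nat.testbit (stage k) (stage_elem k j)) eqn:E; auto.
  apply testbit_stage in E as [i [hi E]]. apply stage_elem_inj in E. lia.
Qed.
Lemma popcount_stage k : popcount (stage k) = k.
Proof. induction k; [reflexivity|]. rewrite stage_S, popcount_add_pow2; [lia | apply testbit_stage_new]. Qed.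

Lemma extends_stage_spec D : extends_stage D <> 0 <->
  fe D = fe (stage (pred (popcount D))) /\
  exists j, j < S D /\ D = stage (pred (popcount D)) + 2 ^ stage_elem (pred (popcount D)) j.
Proof.
  unfold extends_stage, is_ext, stage_elem. cbv zeta.
  rewrite mul_neq0, b2n_eqb_neq0, sg_neq0, bsum_neq0. setoid_rewrite b2n_eqb_neq0. tauto.
Qed.

Lemma fe_stage_S k : has_change (stage k) k -> fe (stage (S k)) <> fe (stage k).
Proof. intros H. apply (least_change_spec (stage k) k H). Qed.

Section AllStagesChange.
Hypothesis all_change : forall k, has_change (stage k) k.

Definition Lunion y := exists i, y = added i.

Lemma W_enum_index_Lunion y : W (enum_index e) y <-> Lunion y.
Proof.
  rewrite W_enum_index. split.
  - intros [_ H]. eexists; eauto.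
  - intros [i ->]. unfold added. rewrite elem_stage_stage_elem. split; auto. intros j _; apply all_change.
Qed.

Lemma guess_Lunion D : D <> 0 -> (forall y, Nat.testbit D y = true -> Lunion y) -> guess D = enum_index e.
Proof.
  intros Hd HD. rewrite guess_neq0 by auto. destruct (Nat.eqb_spec (extends_stage D) 0) as [|Hext]; [reflexivity|].
  apply extends_stage_spec in Hext as [Hf [j [_ HD']]]. set (k := pred (popcount D)) in *.
  assert (Hb : Nat.testbit D (stage_elem k j) = true).
  { rewrite HD', testbit_add_pow2, Nat.eqb_refl by apply testbit_stage_new. apply Bool.orb_true_r. }
  apply HD in Hb as [i Hi]. apply stage_elem_inj in Hi as [-> ->].
  exfalso. apply (fe_stage_S i (all_change i)). rewrite stage_S. unfold added. rewrite <- HD'. auto.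
Qed.

Lemma LEARNER_learns_Lunion : TxtSdEx_learns (code LEARNER) Lunion.
Proof.
  apply LEARNER_learns.
  - intros D Hd HD. split.
    + destruct (HD _ (testbit_min_elem D Hd)) as [j ->]. apply nfst_stage_elem.
    + intros j _. apply all_change.
  - intros T HT. apply (Ex_eventually _ _ (enum_index e));
      [|intros x; rewrite W_enum_index_Lunion; symmetry; apply HT].
    assert (content T (added 0)) as [n Hn] by (apply HT; exists 0; auto).
    exists (S n). intros m hm. apply guess_Lunion.
    + intros E. assert (Hb : Nat.testbit (content_code T m) (added 0) = true).
      { apply testbit_content_code. exists n; split; auto; lia. }
      rewrite E, Nat.bits_0 in Hb. discriminate.
    + intros y Hy. apply (content_code_sub Lunion T m); auto.
Qed.

Definition stage_text : text := fun n => Some (added n).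

Lemma content_code_stage_text n : content_code stage_text n = stage n.
Proof.
  induction n; [reflexivity|]. cbn [content_code]. rewrite IHn. unfold stage_text.
  rewrite lor_pow2; [reflexivity | apply testbit_stage_new].
Qed.

Lemma not_learns_Lunion : ~ TxtSdEx_learns e Lunion.
Proof.
  intros H. destruct (learner_guesses Lunion stage_text H) as [n0 Hn0].
  - intros x. unfold content, stage_text, Lunion. split.
    + intros [n Hn]. injection Hn; intros; subst; eauto.
    + intros [i ->]. exists i; auto.
  - destruct (Hn0 (S n0) ltac:(lia)) as [E _]. rewrite !content_code_stage_text in E.
    exact (fe_stage_S n0 (all_change n0) E).
Qed.
End AllStagesChange.

Section StuckStage.
Variable k : nat.
Hypothesis below_change : stages_change k.
Hypothesis stuck : ~ has_change (stage k) k.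

Definition stage_ext := stage k + 2 ^ stage_elem k 0.

Lemma fe_stage_ext : fe stage_ext = fe (stage k).
Proof. apply NNPP. intros H. apply stuck. exists 0. exact H. Qed.
Lemma testbit_stage_ext y : Nat.testbit stage_ext y = true <-> Nat.testbit (stage k) y = true \/ y = stage_elem k 0.
Proof.
  unfold stage_ext. rewrite testbit_add_pow2 by apply testbit_stage_new.
  rewrite Bool.orb_true_iff, Nat.eqb_eq. split; intros [h|h]; auto.
Qed.
Lemma popcount_stage_ext : popcount stage_ext = S k.
Proof. unfold stage_ext. rewrite popcount_add_pow2, popcount_stage; auto. apply testbit_stage_new. Qed.

Lemma W_enum_index_stuck y : W (enum_index e) y <-> Nat.testbit (stage k) y = true.
Proof.
  rewrite W_enum_index, testbit_stage. split.
  - intros [H1 H2]. exists (elem_stage y). split; auto.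
    destruct (Nat.lt_ge_cases (elem_stage y) k); auto. exfalso. apply stuck, H1. lia.
  - intros [i [hi ->]]. unfold added. rewrite elem_stage_stage_elem. split; auto.
    intros j hj. apply below_change. lia.
Qed.

Lemma LEARNER_learns_sub_stage_ext B :
  (forall y, Nat.testbit B y = true -> Nat.testbit stage_ext y = true) ->
  (forall y, W (guess B) y <-> Nat.testbit B y = true) ->
  TxtSdEx_learns (code LEARNER) (fun y => Nat.testbit B y = true).
Proof.
  intros HB HW. apply LEARNER_learns.
  - intros D Hd HD. split.
    + pose proof (testbit_min_elem _ Hd) as Hb. apply HD, HB, testbit_stage_ext in Hb as [Hb | ->].
      * apply testbit_stage in Hb as [i [_ ->]]. apply nfst_stage_elem.
      * apply nfst_stage_elem.
    + intros i hi. apply below_change.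
      pose proof (popcount_mono D stage_ext (fun y Hy => HB y (HD y Hy))). rewrite popcount_stage_ext in *. lia.
  - intros T HT. apply (Ex_eventually _ _ (guess B)); [|intros x; rewrite HW; symmetry; apply HT].
    destruct (content_code_eventually _ T B HT (fun y => iff_refl _)) as [n0 Hn0].
    exists n0. intros n hn. rewrite Hn0; auto.
Qed.

Lemma W_guess_stage y : W (guess (stage k)) y <-> Nat.testbit (stage k) y = true.
Proof.
  destruct (Nat.eq_dec k 0) as [E0|Hk].
  - rewrite E0. change (W (finset_index 0) y <-> Nat.testbit 0 y = true). apply W_finset_index.
  - assert (Hd : stage k <> 0).
    { intros E. assert (Hb : Nat.testbit (stage k) (added (pred k)) = true)
        by (apply testbit_stage; exists (pred k); split; auto; lia).
      rewrite E, Nat.bits_0 in Hb; discriminate. }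
    assert (Hc : extends_stage (stage k) = 0).
    { destruct (Nat.eq_dec (extends_stage (stage k)) 0) as [|Hext]; auto. exfalso.
      apply extends_stage_spec in Hext as [Hf _]. rewrite popcount_stage in Hf.
      apply (fe_stage_S (pred k)); [apply below_change; lia|]. replace (S (pred k)) with k by lia. auto. }
    rewrite guess_neq0 by auto. rewrite Hc. apply W_enum_index_stuck.
Qed.

Lemma W_guess_stage_ext y : W (guess stage_ext) y <-> Nat.testbit stage_ext y = true.
Proof.
  assert (Hd : stage_ext <> 0).
  { intros E. assert (Hb : Nat.testbit stage_ext (stage_elem k 0) = true) by (apply testbit_stage_ext; auto).
    rewrite E, Nat.bits_0 in Hb; discriminate. }
  assert (Hc : extends_stage stage_ext <> 0).
  { apply extends_stage_spec. rewrite popcount_stage_ext. cbn [pred]. split; [apply fe_stage_ext|].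
    exists 0. split; [lia | reflexivity]. }
  rewrite guess_neq0 by auto. destruct (Nat.eqb_spec (extends_stage stage_ext) 0); [contradiction|].
  apply W_finset_index.
Qed.

Lemma W_fe_learned B : TxtSdEx_learns e (fun y => Nat.testbit B y = true) ->
  forall y, W (fe B) y <-> Nat.testbit B y = true.
Proof.
  intros H. destruct (learner_guesses _ _ H (bits_text_Txt B)) as [n0 Hn0].
  destruct (content_code_eventually _ _ B (bits_text_Txt B) (fun y => iff_refl _)) as [n1 Hn1].
  destruct (Hn0 (max n0 n1) ltac:(lia)) as [E HW]. rewrite Hn1 in E by lia.
  intros y. rewrite E, HW. apply bits_text_Txt.
Qed.

Lemma not_learns_both : TxtSdEx_learns e (fun y => Nat.testbit (stage k) y = true) ->
  ~ TxtSdEx_learns e (fun y => Nat.testbit stage_ext y = true).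
Proof.
  intros H1 H2. pose proof (W_fe_learned _ H2 (stage_elem k 0)) as W2.
  rewrite fe_stage_ext, (W_fe_learned _ H1), testbit_stage_new in W2.
  assert (Hb : Nat.testbit stage_ext (stage_elem k 0) = true) by (apply testbit_stage_ext; auto).
  apply W2 in Hb. discriminate.
Qed.
End StuckStage.

Lemma diagonal_language : exists L, TxtSdEx_learns (code LEARNER) L /\ ~ TxtSdEx_learns e L.
Proof.
  destruct (classic (forall k, has_change (stage k) k)) as [Hall|Hstuck].
  - exists Lunion. split; [apply LEARNER_learns_Lunion | apply not_learns_Lunion]; auto.
  - destruct (least_witness (fun k => ~ has_change (stage k) k)) as [k [Hk Hmin]].
    { intros n; apply classic. }
    { apply not_all_ex_not; auto. }
    assert (Hbelow : stages_change k) by (intros i hi; apply NNPP, Hmin; auto).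
    destruct (classic (TxtSdEx_learns e (fun y => Nat.testbit (stage k) y = true))) as [H1|H1].
    + exists (fun y => Nat.testbit (stage_ext k) y = true). split.
      * apply (LEARNER_learns_sub_stage_ext k); auto. apply (W_guess_stage_ext k); auto.
      * apply (not_learns_both k); auto.
    + exists (fun y => Nat.testbit (stage k) y = true). split; auto.
      apply (LEARNER_learns_sub_stage_ext k); auto.
      * intros y Hy. apply testbit_stage_ext; auto.
      * apply (W_guess_stage k); auto.
Qed.
End Diagonalisation.

Theorem theorem9 :
  exists C : lang_class, in_TxtSdEx C /\ ~ in_RTxtSdEx C.
Proof.
  exists (TxtSdEx_learns (code LEARNER)). split.
  - exists (code LEARNER). intros L HL. exact HL.
  - intros [e [Htot Hlearns]].
    destruct (diagonal_language e (fun x => epsilon (inhabits 0) (phi e x))) as [L [HL HnL]].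
    + intros x. apply epsilon_spec, Htot.
    + exact (HnL (Hlearns L HL)).
Qed.
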